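(* Let $a\le k\le n$ be integers and let $\gamma$ be a boundary condition of the one-row region $\{1\}\times[a,n]$ such that the non-$\varnothing$ values of $\gamma_N$ are exactly $[a,k]$ (each once), the non-$\varnothing$ values of $\gamma_S$ are exactly $[a,k]$ (each once), and $\gamma_E(1)=\gamma_W(1)=\varnothing$. Let $w\in S_{[a,n]}$ (resp. $u\in S_{[a,n]}$) be the permutation with $w(\ell)=\gamma_N^{-1}(\ell)$ (resp. $u(\ell)=\gamma_S^{-1}(\ell)$) for $\ell\in[a,k]$ and decreasing on $(k,n]$. Then $u\xrightarrow{k}w$ if and only if there exists a BPD of $\{1\}\times[a,n]$ satisfying $\gamma$. In this case there is exactly one such BPD $D$, and $\{c: D(1,c)\text{ is blank}\}=\mathrm{fix}_{(k,n]}(u,w)$.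
   Context: $S_{[a,n]}$ is the set of bijections of $\mathbb Z$ fixing every integer outside $[a,n]$; $\gamma_N^{-1}(\ell)$ denotes the column $c$ with $\gamma_N(c)=\ell$ (similarly $\gamma_S^{-1}$). $\tau_{i,j}$ is the transposition of $i<j$, $u\tau_{i,j}=u\circ\tau_{i,j}$, $\ell(u)$ = number of inversions; $u\lessdot_k u\tau_{i,j}$ if $i\le k<j$ and $\ell(u\tau_{i,j})=\ell(u)+1$; $u\xrightarrow{k}w$ if there is a chain $u=v_1\lessdot_k\cdots\lessdot_k v_s=w$ ($s\ge1$), $v_{t+1}=v_t\tau_{i_t,j_t}$, with $v_1(i_1)<\cdots<v_{s-1}(i_{s-1})$. $\mathrm{fix}_I(u,w)=\{u(t):t\in I,\ u(t)=w(t)\}$. Bumpless pipedreams on the one-row region: a tiling assigns each cell $(1,c)$, $c\in[a,n]$, one of: blank; horizontal (pipe joining left and right edges); vertical (top and bottom); r-elbow (bottom and right); j-elbow (top and left); cross (a left–right and a top–bottom pipe, which cross, the top–bottom one vertical). Consistent: adjacent cells agree on whether a pipe uses their common edge. A pipe enters from the row if it crosses the right edge of $(1,n)$, exits from the row if it crosses the left edge of $(1,a)$, enters (exits) from column $c$ if it crosses the top (bottom) edge of $(1,c)$. A BPD is a consistent tiling in which any two pipes cross at most once and every pipe enters and exits. A labeling (distinct integers on pipes) is valid if at each crossing the vertical pipe has the smaller label. A boundary condition $\gamma=(\gamma_N,\gamma_E,\gamma_S,\gamma_W)$, $\gamma_N,\gamma_S:[a,n]\to\mathbb Z\sqcup\{\varnothing\}$,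 $\gamma_E,\gamma_W:\{1\}\to\mathbb Z\sqcup\{\varnothing\}$, is satisfied by a BPD if some valid labeling makes a pipe enter (exit) from the row iff $\gamma_E(1)\neq\varnothing$ ($\gamma_W(1)\ne\varnothing$), with that label, and a pipe enter (exit) from column $c$ iff $\gamma_N(c)\neq\varnothing$ ($\gamma_S(c)\ne\varnothing$), with that label. *)

From Stdlib Require Import ZArith List Relations Bool.
Import ListNotations.
Open Scope Z_scope.

Definition in_S (a n : Z) (w : Z -> Z) : Prop :=
  (forall x y, w x = w y -> x = y) /\ (forall y, exists x, w x = y) /\
  (forall x, x < a \/ n < x -> w x = x).

(* transposition tau_{i,j}; u tau_{i,j} = fun x => u (tau i j x) *)
Definition tau (i j : Z) (x : Z) : Z :=
  if Z.eq_dec x i then j else if Z.eq_dec x j then i else x.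

Definition zrange (lo hi : Z) : list Z :=
  map (fun t => lo + Z.of_nat t) (seq 0 (Z.to_nat (hi - lo + 1))).

Definition ninv_win (v : Z -> Z) (lo hi : Z) : nat :=
  length (filter (fun p => andb (fst p <? snd p) (v (snd p) <? v (fst p)))
                 (list_prod (zrange lo hi) (zrange lo hi))).

(* For a bijection with
   finite support this is computed on any window containing the support
   (inversions never involve a fixed point outside such a window). *)
Definition has_length (v : Z -> Z) (L : nat) : Prop :=
  exists lo hi, (forall x, x < lo \/ hi < x -> v x = x) /\ ninv_win v lo hi = L.

Definition kcover (k : Z) (u : Z -> Z) (i j : Z) (v : Z -> Z) : Prop :=
  i <= k < j /\ (forall x, v x = u (tau i j x)) /\
  exists L, has_length u L /\ has_length v (S L).

(* u --k--> w : a chain u = v_0 ⋖_k v_1 ⋖_k ... ⋖_k v_m = w (m >= 0, i.e.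
   s = m+1 >= 1), v_{t+1} = v_t tau_{I t, J t}, with
   v_0(I 0) < v_1(I 1) < ... < v_{m-1}(I (m-1)). *)
Definition kchain (k : Z) (u w : Z -> Z) : Prop :=
  exists (m : nat) (v : nat -> Z -> Z) (I J : nat -> Z),
    (forall x, v O x = u x) /\ (forall x, v m x = w x) /\
    (forall t, (t < m)%nat -> kcover k (v t) (I t) (J t) (v (S t))) /\
    (forall t, (S t < m)%nat -> v t (I t) < v (S t) (I (S t))).

Definition in_fix (k n : Z) (u w : Z -> Z) (c : Z) : Prop :=
  exists t, k < t <= n /\ u t = w t /\ c = u t.

Inductive tile : Type :=
  | Blank | Hor | Vrt | RElb (* bottom & right *) | JElb (* top & left *) | Cross.

(* A tiling of the row: column c |-> tile of cell (1,c); only c in [a,n] matter. *)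
Definition tiling := Z -> tile.

(* Edges of the row: top / bottom edge of cell (1,c), and the vertical line
   EV c between columns c and c+1 (EV (a-1) = left edge of (1,a),
   EV n = right edge of (1,n)). *)
Inductive edge : Type :=
  | ETop (c : Z) | EBot (c : Z) | EV (c : Z).

Definition tile_link (t : tile) (c : Z) (e e' : edge) : Prop :=
  match t with
  | Blank => False
  | Hor => e = EV (c - 1) /\ e' = EV c
  | Vrt => e = ETop c /\ e' = EBot c
  | RElb => e = EBot c /\ e' = EV c
  | JElb => e = ETop c /\ e' = EV (c - 1)
  | Cross => (e = EV (c - 1) /\ e' = EV c) \/ (e = ETop c /\ e' = EBot c)
  end.

Definition link (a n : Z) (D : tiling) (e e' : edge) : Prop :=
  exists c, a <= c <= n /\ tile_link (D c) c e e'.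

Definition used (a n : Z) (D : tiling) (e : edge) : Prop :=
  exists e', link a n D e e' \/ link a n D e' e.

Definition conn (a n : Z) (D : tiling) : relation edge :=
  clos_refl_sym_trans edge (link a n D).

Definition uses_left (t : tile) : bool :=
  match t with Hor | JElb | Cross => true | _ => false end.
Definition uses_right (t : tile) : bool :=
  match t with Hor | RElb | Cross => true | _ => false end.

Definition consistent (a n : Z) (D : tiling) : Prop :=
  forall c, a <= c < n -> uses_right (D c) = uses_left (D (c + 1)).

(* At a cross tile at c, the vertical pipe is the one through ETop c and the
   horizontal pipe the one through EV c.  Two pipes cross at most once. *)
Definition cross_at_most_once (a n : Z) (D : tiling) : Prop :=
  forall c c', a <= c <= n -> a <= c' <= n -> c <> c' ->
    D c = Cross -> D c' = Cross ->
    ~ ((conn a n D (ETop c) (ETop c') /\ conn a n D (EV c) (EV c')) \/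
       (conn a n D (ETop c) (EV c') /\ conn a n D (EV c) (ETop c'))).

Definition is_entry (a n : Z) (e : edge) : Prop :=
  (exists c, a <= c <= n /\ e = ETop c) \/ e = EV n.
Definition is_exit (a n : Z) (e : edge) : Prop :=
  (exists c, a <= c <= n /\ e = EBot c) \/ e = EV (a - 1).

Definition enters_exits (a n : Z) (D : tiling) : Prop :=
  forall e, used a n D e ->
    (exists e1, is_entry a n e1 /\ used a n D e1 /\ conn a n D e e1) /\
    (exists e2, is_exit a n e2 /\ used a n D e2 /\ conn a n D e e2).

Definition is_BPD (a n : Z) (D : tiling) : Prop :=
  consistent a n D /\ cross_at_most_once a n D /\ enters_exits a n D.

Definition valid_labeling (a n : Z) (D : tiling) (lab : edge -> Z) : Prop :=
  (forall e e', used a n D e -> used a n D e' ->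
     (conn a n D e e' <-> lab e = lab e')) /\
  (forall c, a <= c <= n -> D c = Cross -> lab (ETop c) < lab (EV c)).

(* boundary condition gamma = (gN, gE, gS, gW); None = ∅ *)
Definition satisfies (a n : Z) (D : tiling)
    (gN : Z -> option Z) (gE : option Z) (gS : Z -> option Z) (gW : option Z)
    : Prop :=
  exists lab, valid_labeling a n D lab /\
    (used a n D (EV n) <-> gE <> None) /\
    (forall l, gE = Some l -> lab (EV n) = l) /\
    (used a n D (EV (a - 1)) <-> gW <> None) /\
    (forall l, gW = Some l -> lab (EV (a - 1)) = l) /\
    (forall c, a <= c <= n ->
       (used a n D (ETop c) <-> gN c <> None) /\
       (forall l, gN c = Some l -> lab (ETop c) = l)) /\
    (forall c, a <= c <= n ->
       (used a n D (EBot c) <-> gS c <> None) /\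
       (forall l, gS c = Some l -> lab (EBot c) = l)).

Definition values_exactly (a k n : Z) (g : Z -> option Z) : Prop :=
  (forall c l, a <= c <= n -> g c = Some l -> a <= l <= k) /\
  (forall l, a <= l <= k -> exists c, a <= c <= n /\ g c = Some l) /\
  (forall c c' l, a <= c <= n -> a <= c' <= n ->
     g c = Some l -> g c' = Some l -> c = c').

(* For l in [a,k] consider the interval [u l, w l].  Both sides of the equivalence are
   characterized by the same condition on these intervals: u l <= w l, distinct
   nondegenerate intervals are disjoint, and a fixed value u l' = w l' strictly inside
   [u l, w l] has l' < l.

   A k-cover u < u tau_{i,j} raises the value at i <= k and lowers the one at j > k.  In a
   k-chain the increasing condition on the moved values makes the positions j strictly
   decrease, so every value at a position <= k can be followed through the chain, which
   yields the condition.  Conversely, swapping the position l with the smallest value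
   u l < w l with the position of the first value above u l not taken on [a,k] is a
   k-cover preserving the condition, and iterating it builds a chain.

   In a BPD satisfying the boundary condition, the pipe labelled l must enter at column
   w l, run leftwards and exit at column u l; this determines the tiling, and the condition
   on the intervals is exactly what makes it a BPD with a valid labeling (crossings sit at
   fixed values inside an interval).  Its blank cells are the columns u r, r > k, in no
   interval (u l, w l], and along a chain these are the fixed points u r = w r. *)

From Stdlib Require Import ZArith List Relations Bool Lia FinFun Classical FunctionalExtensionality.
Import ListNotations.
Open Scope Z_scope.

Definition zsum (f : Z -> Z) (l : list Z) : Z := fold_right (fun x acc => f x + acc) 0 l.
Definition ind (b : bool) : Z := if b then 1 else 0.

Lemma zsum_ext f g l : (forall x, In x l -> f x = g x) -> zsum f l = zsum g l.
Proof. induction l; simpl; intros H; auto. rewrite H, IHl; auto. Qed.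

Lemma zsum_add f g l : zsum (fun x => f x + g x) l = zsum f l + zsum g l.
Proof. induction l; simpl; lia. Qed.

Lemma zsum_sub f g l : zsum (fun x => f x - g x) l = zsum f l - zsum g l.
Proof. induction l; simpl; lia. Qed.

Lemma zsum_scal c f l : zsum (fun x => c * f x) l = c * zsum f l.
Proof. induction l; simpl; lia. Qed.

Lemma zsum_app f l1 l2 : zsum f (l1 ++ l2) = zsum f l1 + zsum f l2.
Proof. induction l1; simpl; lia. Qed.

Lemma zsum_zero l : zsum (fun _ => 0) l = 0.
Proof. induction l; simpl; lia. Qed.

Lemma zsum_le f g l : (forall x, In x l -> f x <= g x) -> zsum f l <= zsum g l.
Proof.
  induction l as [|y l IH]; simpl; intros H; [lia|].
  specialize (IH (fun x Hx => H x (or_intror Hx))). specialize (H y (or_introl eq_refl)). lia.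
Qed.

Lemma zsum_lt f g l x : (forall y, In y l -> f y <= g y) -> In x l -> f x < g x ->
  zsum f l < zsum g l.
Proof.
  induction l as [|y l IH]; simpl; intros H Hx Hlt; [contradiction|].
  destruct Hx as [<-|Hx].
  - pose proof (zsum_le f g l (fun y Hy => H y (or_intror Hy))). lia.
  - specialize (IH (fun y Hy => H y (or_intror Hy)) Hx Hlt). specialize (H y (or_introl eq_refl)). lia.
Qed.

Lemma zsum_ind_nonneg (P : Z -> bool) l : 0 <= zsum (fun p => ind (P p)) l.
Proof. induction l as [|y l IH]; simpl; [lia|]. unfold ind at 1. destruct (P y); lia. Qed.

Lemma zsum_single i c l : NoDup l -> In i l ->
  zsum (fun p => if Z.eq_dec p i then c else 0) l = c.
Proof.
  induction l as [|x l IH]; simpl; intros Hnd Hin; [contradiction|].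
  inversion Hnd; subst. destruct (Z.eq_dec x i) as [->|Hx].
  - rewrite (zsum_ext _ (fun _ => 0)), zsum_zero; [lia|].
    intros y Hy. destruct (Z.eq_dec y i); subst; [contradiction|auto].
  - destruct Hin; [congruence|]. rewrite IH; auto.
Qed.

Lemma zrange_nil lo hi : hi < lo -> zrange lo hi = [].
Proof. intros. unfold zrange. replace (Z.to_nat (hi - lo + 1)) with O by lia. reflexivity. Qed.

Lemma zrange_cons lo hi : lo <= hi -> zrange lo hi = lo :: zrange (lo + 1) hi.
Proof.
  intros H. unfold zrange.
  replace (Z.to_nat (hi - lo + 1)) with (S (Z.to_nat (hi - (lo + 1) + 1))) by lia.
  simpl. f_equal; [lia|].
  rewrite <- seq_shift, map_map. apply map_ext. intros; lia.
Qed.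

Lemma zrange_ind (P : Z -> Z -> Prop) :
  (forall lo hi, hi < lo -> P lo hi) ->
  (forall lo hi, lo <= hi -> P (lo + 1) hi -> P lo hi) ->
  forall lo hi, P lo hi.
Proof.
  intros Hnil Hcons lo hi.
  remember (Z.to_nat (hi - lo + 1)) as N eqn:HN. revert lo HN.
  induction N; intros lo HN; [apply Hnil; lia|].
  apply Hcons; [lia|]. apply IHN. lia.
Qed.

Lemma in_zrange x lo hi : In x (zrange lo hi) <-> lo <= x <= hi.
Proof.
  revert x. pattern lo, hi. apply zrange_ind; clear lo hi; intros lo hi H.
  - rewrite zrange_nil by lia. simpl. lia.
  - intros IH x. rewrite zrange_cons by lia. simpl. rewrite IH. lia.
Qed.

Lemma NoDup_zrange lo hi : NoDup (zrange lo hi).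
Proof.
  pattern lo, hi. apply zrange_ind; clear lo hi; intros lo hi H.
  - rewrite zrange_nil by lia. constructor.
  - intros IH. rewrite zrange_cons by lia. constructor; auto. rewrite in_zrange. lia.
Qed.

Lemma zrange_app lo m hi : lo <= m + 1 -> m <= hi ->
  zrange lo hi = zrange lo m ++ zrange (m + 1) hi.
Proof.
  revert hi. pattern lo, m. apply zrange_ind; clear lo m; intros lo m H.
  - intros hi H1 H2. replace lo with (m + 1) by lia. rewrite (zrange_nil (m + 1) m) by lia. reflexivity.
  - intros IH hi H1 H2. rewrite (zrange_cons lo hi), (zrange_cons lo m) by lia.
    simpl. f_equal. apply IH; lia.
Qed.

Lemma zsum_zrange_restrict f lo hi lo' hi' : lo' <= lo -> hi <= hi' ->
  zsum (fun p => if (lo <=? p) && (p <=? hi) then f p else 0) (zrange lo' hi') =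
  zsum f (zrange lo hi).
Proof.
  intros H1 H2. destruct (Z_le_gt_dec lo (hi + 1)).
  - rewrite (zrange_app lo' (lo - 1) hi') by lia. replace (lo - 1 + 1) with lo by lia.
    rewrite (zrange_app lo hi hi') by lia. rewrite !zsum_app.
    assert (Hin : forall x, In x (zrange lo hi) -> ((lo <=? x) && (x <=? hi)) = true)
      by (intros x Hx; apply in_zrange in Hx; apply andb_true_iff; rewrite !Z.leb_le; lia).
    assert (Hout : forall x, In x (zrange lo' (lo - 1) ++ zrange (hi + 1) hi') ->
                   ((lo <=? x) && (x <=? hi)) = false).
    { intros x Hx. apply in_app_or in Hx. rewrite !in_zrange in Hx.
      apply andb_false_iff. rewrite !Z.leb_gt. lia. }
    rewrite (zsum_ext _ f (zrange lo hi)) by (intros x Hx; rewrite Hin; auto).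
    rewrite (zsum_ext _ (fun _ => 0) (zrange lo' (lo - 1)))
      by (intros x Hx; rewrite Hout; auto using in_or_app).
    rewrite (zsum_ext _ (fun _ => 0) (zrange (hi + 1) hi'))
      by (intros x Hx; rewrite Hout; auto using in_or_app).
    rewrite !zsum_zero. lia.
  - rewrite (zrange_nil lo hi) by lia. rewrite (zsum_ext _ (fun _ => 0)) by
      (intros x _; destruct (Z.leb_spec lo x), (Z.leb_spec x hi); simpl; auto; lia).
    apply zsum_zero.
Qed.

(** * Covers and inversion counts *)

Definition inv_ind (v : Z -> Z) (p q : Z) : Z := ind ((p <? q) && (v q <? v p)).
Definition inv_sum (v : Z -> Z) (W : list Z) : Z :=
  zsum (fun p => zsum (fun q => inv_ind v p q) W) W.

Lemma length_filter_list_prod (f : Z * Z -> bool) A B :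
  Z.of_nat (length (filter f (list_prod A B))) =
  zsum (fun p => zsum (fun q => ind (f (p, q))) B) A.
Proof.
  induction A as [|x A IH]; simpl; auto.
  rewrite filter_app, length_app, Nat2Z.inj_add, IH. f_equal. clear IH.
  induction B as [|y B IHB]; [reflexivity|].
  cbn [map filter zsum fold_right]. fold (zsum (fun q => ind (f (x, q))) B).
  destruct (f (x, y)); cbn [length]; rewrite ?Nat2Z.inj_succ, IHB; unfold ind; lia.
Qed.

Lemma ninv_win_inv_sum v lo hi : Z.of_nat (ninv_win v lo hi) = inv_sum v (zrange lo hi).
Proof. apply length_filter_list_prod. Qed.

Lemma support_maps_into v lo hi : Injective v -> (forall x, x < lo \/ hi < x -> v x = x) ->
  forall x, lo <= x <= hi -> lo <= v x <= hi.
Proof.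
  intros Hinj Hfix x Hx.
  destruct (Z_le_gt_dec lo (v x)), (Z_le_gt_dec (v x) hi); try lia;
    assert (E : v (v x) = v x) by (apply Hfix; lia); apply Hinj in E; lia.
Qed.

Lemma inv_ind_outside v lo hi p q : Injective v ->
  (forall x, x < lo \/ hi < x -> v x = x) -> ~ (lo <= p <= hi /\ lo <= q <= hi) ->
  inv_ind v p q = 0.
Proof.
  intros Hinj Hfix Hout. pose proof (support_maps_into v lo hi Hinj Hfix) as Hmaps.
  unfold inv_ind, ind.
  destruct (Z.ltb_spec p q); simpl; auto. destruct (Z.ltb_spec (v q) (v p)); auto.
  exfalso. destruct (Z_le_gt_dec lo p), (Z_le_gt_dec p hi), (Z_le_gt_dec lo q), (Z_le_gt_dec q hi);
    try lia; repeat match goal with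
    | H : v ?x < _ |- _ => first [rewrite (Hfix x) in H by lia | specialize (Hmaps x ltac:(lia))]
    | H : _ < v ?x |- _ => first [rewrite (Hfix x) in H by lia | specialize (Hmaps x ltac:(lia))]
    end; lia.
Qed.

Lemma ninv_win_extend v lo hi lo' hi' : Injective v ->
  (forall x, x < lo \/ hi < x -> v x = x) -> lo' <= lo -> hi <= hi' ->
  ninv_win v lo' hi' = ninv_win v lo hi.
Proof.
  intros Hinj Hfix H1 H2. apply Nat2Z.inj. rewrite !ninv_win_inv_sum. unfold inv_sum.
  rewrite <- (zsum_zrange_restrict _ lo hi lo' hi') by lia.
  apply zsum_ext. intros p _. destruct ((lo <=? p) && (p <=? hi)) eqn:Hp.
  - rewrite <- (zsum_zrange_restrict _ lo hi lo' hi') by lia.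
    apply zsum_ext. intros q _. destruct ((lo <=? q) && (q <=? hi)) eqn:Hq; auto.
    apply (inv_ind_outside v lo hi); auto.
    rewrite andb_false_iff, !Z.leb_gt in Hq. lia.
  - rewrite <- (zsum_zero (zrange lo' hi')). apply zsum_ext. intros q _.
    apply (inv_ind_outside v lo hi); auto.
    rewrite andb_false_iff, !Z.leb_gt in Hp. lia.
Qed.

Definition vtau (v : Z -> Z) (i j : Z) : Z -> Z := fun x => v (tau i j x).

Lemma tau_involutive i j x : tau i j (tau i j x) = x.
Proof. unfold tau. repeat destruct Z.eq_dec; subst; lia. Qed.

Lemma vtau_injective v i j : Injective v -> Injective (vtau v i j).
Proof.
  intros Hinj x y E. unfold vtau in E. apply Hinj in E.
  rewrite <- (tau_involutive i j x), E, tau_involutive. reflexivity.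
Qed.

Lemma vtau_i v i j : vtau v i j i = v j.
Proof. unfold vtau, tau. destruct Z.eq_dec; congruence. Qed.

Lemma vtau_j v i j : vtau v i j j = v i.
Proof. unfold vtau, tau. repeat destruct Z.eq_dec; subst; auto; congruence. Qed.

Lemma vtau_other v i j x : x <> i -> x <> j -> vtau v i j x = v x.
Proof. intros. unfold vtau, tau. repeat destruct Z.eq_dec; subst; auto; congruence. Qed.

Definition bruhat_cover (v : Z -> Z) (i j : Z) : Prop :=
  v i < v j /\ forall p, i < p < j -> ~ (v i < v p < v j).

Definition box (v : Z -> Z) (i j x y p : Z) : bool :=
  (i <? p) && (p <? j) && (x <? v p) && (v p <? y).

Lemma double_zsum_two_lines (h : Z -> Z -> Z) W i j : NoDup W -> In i W -> In j W -> i <> j ->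
  (forall p q, p <> i -> p <> j -> q <> i -> q <> j -> h p q = 0) ->
  zsum (fun p => zsum (fun q => h p q) W) W =
  zsum (fun p => h i p + h j p +
    (if Z.eq_dec p i then 0 else if Z.eq_dec p j then 0 else h p i + h p j)) W.
Proof.
  intros Hnd Hi Hj Hij H0.
  transitivity (zsum (fun p => (if Z.eq_dec p i then zsum (fun q => h i q) W else 0)
     + (if Z.eq_dec p j then zsum (fun q => h j q) W else 0)
     + (if Z.eq_dec p i then 0 else if Z.eq_dec p j then 0 else h p i + h p j)) W).
  - apply zsum_ext. intros p _.
    destruct (Z.eq_dec p i); [subst; repeat destruct Z.eq_dec; try congruence; lia|].
    destruct (Z.eq_dec p j); [subst; repeat destruct Z.eq_dec; try congruence; lia|].
    rewrite (zsum_ext _ (fun q => (if Z.eq_dec q i then h p i else 0) +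
                                  (if Z.eq_dec q j then h p j else 0))).
    + rewrite zsum_add, !zsum_single; auto; lia.
    + intros q _. destruct (Z.eq_dec q i); [subst; repeat destruct Z.eq_dec; try congruence; lia|].
      destruct (Z.eq_dec q j); [subst; repeat destruct Z.eq_dec; try congruence; lia|].
      rewrite H0; auto.
  - rewrite !zsum_add, !zsum_single; auto.
Qed.

(* Only the inversions involving [i] or [j] change when [v] is composed with [tau i j]. *)
Definition swap_delta (v : Z -> Z) (i j p : Z) : Z :=
  let h := fun p q => inv_ind (vtau v i j) p q - inv_ind v p q in
  h i p + h j p + (if Z.eq_dec p i then 0 else if Z.eq_dec p j then 0 else h p i + h p j).

Lemma inv_sum_vtau v i j W : NoDup W -> In i W -> In j W -> i <> j ->
  inv_sum (vtau v i j) W - inv_sum v W = zsum (swap_delta v i j) W.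
Proof.
  intros. unfold inv_sum. rewrite <- zsum_sub.
  rewrite (zsum_ext _ (fun p => zsum (fun q => inv_ind (vtau v i j) p q - inv_ind v p q) W))
    by (intros; rewrite zsum_sub; reflexivity).
  rewrite (double_zsum_two_lines _ W i j); auto.
  intros p q Hpi Hpj Hqi Hqj. unfold inv_ind. rewrite !vtau_other; auto. lia.
Qed.

Ltac ltb_cases :=
  repeat match goal with
  | |- context [?x <? ?y] => destruct (Z.ltb_spec x y)
  end.

Lemma swap_delta_up v i j p : Injective v -> i < j -> v i < v j ->
  swap_delta v i j p = (if Z.eq_dec p j then 1 else 0) + 2 * ind (box v i j (v i) (v j) p).
Proof.
  intros Hinj Hij Hv. unfold swap_delta, box, inv_ind, ind.
  rewrite vtau_i, vtau_j.
  destruct (Z.eq_dec p i) as [->|Hpi].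
  { rewrite vtau_i. ltb_cases; simpl; repeat destruct Z.eq_dec; lia. }
  destruct (Z.eq_dec p j) as [->|Hpj].
  { rewrite vtau_j. ltb_cases; simpl; repeat destruct Z.eq_dec; lia. }
  rewrite vtau_other by auto.
  assert (v p <> v i) by (intros E; apply Hinj in E; auto).
  assert (v p <> v j) by (intros E; apply Hinj in E; auto).
  ltb_cases; simpl; lia.
Qed.

Lemma swap_delta_down v i j p : Injective v -> i < j -> v j < v i ->
  swap_delta v i j p = - (if Z.eq_dec p j then 1 else 0) - 2 * ind (box v i j (v j) (v i) p).
Proof.
  intros Hinj Hij Hv. unfold swap_delta, box, inv_ind, ind.
  rewrite vtau_i, vtau_j.
  destruct (Z.eq_dec p i) as [->|Hpi].
  { rewrite vtau_i. ltb_cases; simpl; repeat destruct Z.eq_dec; lia. }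
  destruct (Z.eq_dec p j) as [->|Hpj].
  { rewrite vtau_j. ltb_cases; simpl; repeat destruct Z.eq_dec; lia. }
  rewrite vtau_other by auto.
  assert (v p <> v i) by (intros E; apply Hinj in E; auto).
  assert (v p <> v j) by (intros E; apply Hinj in E; auto).
  ltb_cases; simpl; lia.
Qed.

Lemma zsum_ind_zero_iff (P : Z -> bool) l :
  zsum (fun p => ind (P p)) l = 0 <-> forall p, In p l -> P p = false.
Proof.
  induction l as [|y l IH]; [simpl; split; auto; contradiction|].
  change (zsum _ (y :: l)) with (ind (P y) + zsum (fun p => ind (P p)) l).
  pose proof (zsum_ind_nonneg P l) as Hnn. unfold ind at 1.
  destruct (P y) eqn:Py; split.
  - lia.
  - intros H. rewrite H in Py; [discriminate|left; auto].
  - intros H p [<-|Hp]; auto. apply IH; [lia|auto].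
  - intros H. enough (zsum (fun p => ind (P p)) l = 0) by lia.
    apply IH. intros p Hp. apply H. right. auto.
Qed.

Lemma ninv_win_vtau_succ_iff v i j lo hi : Injective v -> lo <= i -> i < j -> j <= hi ->
  ninv_win (vtau v i j) lo hi = S (ninv_win v lo hi) <-> bruhat_cover v i j.
Proof.
  intros Hinj Hlo Hij Hhi.
  assert (Hnd : NoDup (zrange lo hi)) by apply NoDup_zrange.
  assert (Hi : In i (zrange lo hi)) by (apply in_zrange; lia).
  assert (Hj : In j (zrange lo hi)) by (apply in_zrange; lia).
  assert (Hdiff := inv_sum_vtau v i j _ Hnd Hi Hj ltac:(lia)).
  rewrite <- !ninv_win_inv_sum in Hdiff. set (W := zrange lo hi) in *.
  rewrite <- (Nat2Z.inj_iff (ninv_win _ _ _)), Nat2Z.inj_succ.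
  assert (Hne : v i <> v j) by (intros E; apply Hinj in E; lia).
  destruct (Z_lt_le_dec (v i) (v j)) as [Hup|Hdown].
  - rewrite (zsum_ext _ _ _ (fun p _ => swap_delta_up v i j p Hinj Hij Hup)),
            zsum_add, zsum_single, zsum_scal in Hdiff by auto.
    unfold bruhat_cover. split.
    + intros E. split; auto. intros p Hp Hb.
      assert (box v i j (v i) (v j) p = false) as Hf.
      { apply (zsum_ind_zero_iff (box v i j (v i) (v j)) W); [lia|apply in_zrange; lia]. }
      unfold box in Hf. rewrite !andb_false_iff, !Z.ltb_ge in Hf. lia.
    + intros [_ Hno].
      enough (zsum (fun p => ind (box v i j (v i) (v j) p)) W = 0) by lia.
      apply zsum_ind_zero_iff. intros p _. unfold box.
      destruct (Z.ltb_spec i p), (Z.ltb_spec p j), (Z.ltb_spec (v i) (v p)), (Z.ltb_spec (v p) (v j));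
        simpl; auto. exfalso. apply (Hno p); lia.
  - rewrite (zsum_ext _ _ _ (fun p _ => swap_delta_down v i j p Hinj Hij ltac:(lia))),
            zsum_sub, zsum_scal in Hdiff.
    rewrite (zsum_ext _ (fun p => (-1) * (if Z.eq_dec p j then 1 else 0))),
            zsum_scal, zsum_single in Hdiff by (auto; intros; lia).
    pose proof (zsum_ind_nonneg (box v i j (v j) (v i)) W).
    unfold bruhat_cover. split; [lia|intros [? _]; lia].
Qed.

Lemma kcover_inv k v i j v' : Injective v -> kcover k v i j v' ->
  i <= k < j /\ v' = vtau v i j /\ bruhat_cover v i j.
Proof.
  intros Hinj [Hk [Hv' [L [[lo1 [hi1 [Hf1 HL1]]] [lo2 [hi2 [Hf2 HL2]]]]]]].
  assert (E : v' = vtau v i j) by (apply functional_extensionality; auto).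
  subst v'. split; [lia|split; [reflexivity|]].
  set (lo := Z.min (Z.min lo1 lo2) i). set (hi := Z.max (Z.max hi1 hi2) j).
  rewrite <- (ninv_win_extend v lo1 hi1 lo hi) in HL1 by (auto; lia).
  rewrite <- (ninv_win_extend (vtau v i j) lo2 hi2 lo hi) in HL2 by (auto using vtau_injective; lia).
  subst L. apply (ninv_win_vtau_succ_iff v i j lo hi); auto; lia.
Qed.

Lemma kcover_intro k v i j lo hi : Injective v -> (forall x, x < lo \/ hi < x -> v x = x) ->
  lo <= i -> i <= k < j -> j <= hi -> bruhat_cover v i j -> kcover k v i j (vtau v i j).
Proof.
  intros Hinj Hfix Hlo Hk Hhi Hcov. split; [lia|split; [reflexivity|]].
  exists (ninv_win v lo hi). split; exists lo, hi; split; auto.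
  - intros x Hx. rewrite vtau_other by lia. auto.
  - apply ninv_win_vtau_succ_iff; auto; lia.
Qed.

(** * Properties of k-chains *)

Definition decr_on (k n : Z) (f : Z -> Z) : Prop :=
  forall x y, k < x /\ x < y <= n -> f y < f x.

Lemma in_S_maps a n u : in_S a n u -> forall x, a <= x <= n -> a <= u x <= n.
Proof. intros (Hinj & _ & Hfix). apply support_maps_into; auto. Qed.

Definition compatible_intervals (a k : Z) (u w : Z -> Z) : Prop :=
  (forall l, a <= l <= k -> u l <= w l) /\
  (forall l l', a <= l <= k -> a <= l' <= k -> l <> l' -> u l < w l -> u l' < w l' ->
      w l < u l' \/ w l' < u l) /\
  (forall l l', a <= l <= k -> a <= l' <= k -> u l < u l' < w l -> u l' = w l' -> l' < l).

Section Chain.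

Variables (a k n : Z) (u w : Z -> Z).
Hypotheses (Hu : in_S a n u) (Hw : in_S a n w) (Du : decr_on k n u) (Dw : decr_on k n w).
Variables (m : nat) (v : nat -> Z -> Z) (I J : nat -> Z).
Hypotheses (v_first : forall x, v O x = u x) (v_last : forall x, v m x = w x)
  (v_cover : forall t, (t < m)%nat -> kcover k (v t) (I t) (J t) (v (S t)))
  (v_incr : forall t, (S t < m)%nat -> v t (I t) < v (S t) (I (S t))).

Lemma chain_injective t : (t <= m)%nat -> Injective (v t).
Proof.
  induction t as [|t IH]; intros Ht x y E.
  - rewrite !v_first in E. destruct Hu as [Hinj _]. auto.
  - destruct (v_cover t ltac:(lia)) as (_ & Hstep & _). rewrite !Hstep in E.
    apply (vtau_injective _ (I t) (J t) (IH ltac:(lia))) in E. auto.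
Qed.

Lemma chain_step t : (t < m)%nat ->
  I t <= k < J t /\ v (S t) = vtau (v t) (I t) (J t) /\ bruhat_cover (v t) (I t) (J t).
Proof. intros Ht. apply kcover_inv; auto. apply chain_injective. lia. Qed.

Lemma chain_step_I t : (t < m)%nat -> v (S t) (I t) = v t (J t).
Proof. intros Ht. destruct (chain_step t Ht) as (_ & -> & _). apply vtau_i. Qed.

Lemma chain_step_J t : (t < m)%nat -> v (S t) (J t) = v t (I t).
Proof. intros Ht. destruct (chain_step t Ht) as (_ & -> & _). apply vtau_j. Qed.

Lemma chain_step_other t x : (t < m)%nat -> x <> I t -> x <> J t -> v (S t) x = v t x.
Proof. intros Ht. destruct (chain_step t Ht) as (_ & -> & _). apply vtau_other. Qed.

Lemma chain_step_left_other t x : (t < m)%nat -> x <= k -> x <> I t -> v (S t) x = v t x.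
Proof.
  intros Ht Hx Hne. destruct (chain_step t Ht) as (Hk & _).
  apply chain_step_other; auto. lia.
Qed.

Lemma chain_left_mono t t' l : (t <= t' <= m)%nat -> l <= k -> v t l <= v t' l.
Proof.
  intros Ht Hl. induction t' as [|t' IH]; [replace t with O by lia; lia|].
  destruct (Nat.eq_dec t (S t')) as [->|]; [lia|].
  enough (v t' l <= v (S t') l) by (specialize (IH ltac:(lia)); lia).
  destruct (Z.eq_dec l (I t')) as [->|Hne].
  - rewrite chain_step_I by lia. destruct (chain_step t' ltac:(lia)) as (_ & _ & [? _]). lia.
  - rewrite chain_step_left_other by (auto; lia). lia.
Qed.

Lemma chain_I_value_incr t s : (t < s < m)%nat -> v t (I t) < v s (I s).
Proof.
  intros Hts. induction s as [|s IH]; [lia|].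
  destruct (Nat.eq_dec t s) as [->|]; [apply v_incr; lia|].
  specialize (IH ltac:(lia)). specialize (v_incr s ltac:(lia)). lia.
Qed.

Lemma chain_J_after t s : (t < s <= m)%nat -> v s (J t) = v t (I t).
Proof.
  intros Hts. induction s as [|s IH]; [lia|].
  destruct (Nat.eq_dec t s) as [->|]; [apply chain_step_J; lia|].
  specialize (IH ltac:(lia)).
  destruct (chain_step s ltac:(lia)) as (Hks & _ & Hcov & _).
  destruct (chain_step t ltac:(lia)) as (Hkt & _).
  assert (J s <> J t).
  { intros E. rewrite E, IH in Hcov. pose proof (chain_I_value_incr t s ltac:(lia)). lia. }
  rewrite chain_step_other; auto; lia.
Qed.

Lemma chain_J_before t s : (s <= t < m)%nat -> v s (J t) = u (J t).
Proof.
  intros Hst. induction s as [|s IH]; [apply v_first|].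
  specialize (IH ltac:(lia)).
  destruct (chain_step s ltac:(lia)) as (Hks & _).
  destruct (chain_step t ltac:(lia)) as (Hkt & _ & [Hlt _]).
  assert (J s <> J t).
  { intros E. pose proof (chain_J_after s t ltac:(lia)) as E2. rewrite E in E2.
    pose proof (chain_I_value_incr s t ltac:(lia)). lia. }
  rewrite chain_step_other; auto; lia.
Qed.

Lemma chain_swap_values t : (t < m)%nat -> v t (I t) = w (J t) /\ v t (J t) = u (J t).
Proof.
  intros Ht. split.
  - rewrite <- (chain_J_after t m), v_last; auto.
  - apply chain_J_before. lia.
Qed.

Lemma chain_J_range t : (t < m)%nat -> k < J t <= n.
Proof.
  intros Ht. destruct (chain_step t Ht) as (Hk & _ & [Hlt _]).
  destruct (chain_swap_values t Ht) as [E1 E2]. split; [lia|].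
  destruct (Z_le_gt_dec (J t) n); auto. exfalso.
  destruct Hu as (_ & _ & Fu). destruct Hw as (_ & _ & Fw).
  rewrite Fw in E1 by lia. rewrite Fu in E2 by lia. lia.
Qed.

Lemma chain_I_range t : (t < m)%nat -> a <= I t <= k.
Proof.
  intros Ht. destruct (chain_step t Ht) as (Hk & _ & [Hlt _]).
  split; [|lia]. destruct (Z_le_gt_dec a (I t)); auto. exfalso.
  destruct Hu as (_ & _ & Fu). destruct Hw as (_ & _ & Fw).
  pose proof (chain_left_mono O t (I t) ltac:(lia) ltac:(lia)) as M1.
  pose proof (chain_left_mono (S t) m (I t) ltac:(lia) ltac:(lia)) as M2.
  rewrite v_first, Fu in M1 by lia. rewrite v_last, Fw, chain_step_I in M2 by lia. lia.
Qed.

Lemma chain_J_decr t s : (t < s < m)%nat -> J s < J t.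
Proof.
  intros Hts. pose proof (chain_I_value_incr t s Hts) as Hinc.
  destruct (chain_swap_values t ltac:(lia)) as [E1 _].
  destruct (chain_swap_values s ltac:(lia)) as [E2 _].
  pose proof (chain_J_range t ltac:(lia)). pose proof (chain_J_range s ltac:(lia)).
  destruct (Z.lt_total (J s) (J t)) as [|[E|L]]; auto; exfalso.
  - rewrite E in E2. lia.
  - specialize (Dw (J t) (J s) ltac:(lia)). lia.
Qed.

Lemma chain_J_value_incr t s : (t < s < m)%nat -> v t (J t) < v s (J s).
Proof.
  intros Hts. pose proof (chain_J_decr t s Hts).
  destruct (chain_swap_values t ltac:(lia)) as [_ ->].
  destruct (chain_swap_values s ltac:(lia)) as [_ ->].
  pose proof (chain_J_range t ltac:(lia)). pose proof (chain_J_range s ltac:(lia)).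
  apply Du. lia.
Qed.

(* If the next step moved a smaller value, the cover condition of one of the two steps
   would be violated. *)
Lemma chain_J_value_le_next_I t : (S t < m)%nat -> v t (J t) <= v (S t) (I (S t)).
Proof.
  intros Ht.
  destruct (chain_step t ltac:(lia)) as (Hk & HS & [Hlt Hno]).
  destruct (chain_step (S t) ltac:(lia)) as (Hk' & _ & [Hlt' Hno']).
  destruct (Z_le_gt_dec (v t (J t)) (v (S t) (I (S t)))) as [|Hgt]; auto. exfalso.
  pose proof (v_incr t Ht) as Xi.
  destruct (Z.eq_dec (I (S t)) (I t)) as [E|E].
  - rewrite E, chain_step_I in Hgt by lia. lia.
  - assert (v (S t) (I (S t)) = v t (I (S t))) as E2 by (apply chain_step_left_other; auto; lia).
    assert (I (S t) < I t).
    { destruct (Z_lt_le_dec (I (S t)) (I t)); auto. exfalso. apply (Hno (I (S t))); lia. }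
    apply (Hno' (I t)); [lia|].
    pose proof (chain_J_value_incr t (S t) ltac:(lia)).
    rewrite chain_step_I by lia. lia.
Qed.

Lemma chain_J_value_le_I_value t s : (t < s < m)%nat -> v t (J t) <= v s (I s).
Proof.
  intros Hts. pose proof (chain_J_value_le_next_I t ltac:(lia)).
  destruct (Nat.eq_dec s (S t)) as [->|]; auto.
  pose proof (chain_I_value_incr (S t) s ltac:(lia)). lia.
Qed.

Lemma chain_fixed_left l : l <= k -> u l = w l -> forall t, (t <= m)%nat -> v t l = u l.
Proof.
  intros Hl E t Ht.
  pose proof (chain_left_mono O t l ltac:(lia) Hl). pose proof (chain_left_mono t m l ltac:(lia) Hl).
  rewrite v_first in *. rewrite v_last in *. lia.
Qed.

Lemma chain_last_move t l : (t <= m)%nat -> l <= k -> u l < v t l ->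
  exists s, (s < t)%nat /\ v t l = v s (J s).
Proof.
  induction t as [|t IH]; intros Ht Hl Hlt; [rewrite v_first in Hlt; lia|].
  destruct (Z.eq_dec l (I t)) as [->|Hne].
  - exists t. split; [lia|]. apply chain_step_I. lia.
  - rewrite chain_step_left_other in * by (auto; lia).
    destruct (IH ltac:(lia) Hl Hlt) as [s [Hs Es]]. exists s. split; auto.
Qed.

Lemma chain_moved_below_I t l : (t < m)%nat -> l <= k -> l <> I t -> u l < v t l ->
  v t l < v t (I t).
Proof.
  intros Ht Hl Hne Hlt.
  destruct (chain_last_move t l ltac:(lia) Hl Hlt) as [s [Hs Es]].
  pose proof (chain_J_value_le_I_value s t ltac:(lia)).
  assert (v t l <> v t (I t)) by (intros E; apply (chain_injective t ltac:(lia)) in E; auto).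
  lia.
Qed.

Lemma chain_crossing_order t : (t <= m)%nat -> forall l l', l <= k -> l' <= k ->
  u l < u l' < v t l -> u l' = w l' -> l' < l.
Proof.
  induction t as [|t IH]; intros Ht l l' Hl Hl' Hlt Hfix; [rewrite v_first in Hlt; lia|].
  specialize (IH ltac:(lia)).
  destruct (Z.eq_dec l (I t)) as [->|Hne].
  - rewrite chain_step_I in Hlt by lia.
    destruct (Z_lt_le_dec (u l') (v t (I t))); [apply (IH (I t) l'); auto; lia|].
    pose proof (chain_fixed_left l' Hl' Hfix t ltac:(lia)) as Ut.
    destruct (chain_step t ltac:(lia)) as (Hk & _ & [Hcov Hno]).
    destruct (Z.eq_dec (u l') (v t (I t))) as [E|E].
    + rewrite <- Ut in E. apply (chain_injective t ltac:(lia)) in E. subst l'. lia.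
    + destruct (Z_lt_le_dec l' (I t)); auto.
      destruct (Z.eq_dec l' (I t)) as [->|]; [lia|].
      exfalso. apply (Hno l'); [lia|]. rewrite Ut. lia.
  - rewrite chain_step_left_other in Hlt by (auto; lia). apply (IH l l'); auto.
Qed.

Lemma chain_intervals_disjoint t : (t <= m)%nat -> forall l l', l <= k -> l' <= k -> l <> l' ->
  u l < v t l -> u l' < v t l' -> v t l < u l' \/ v t l' < u l.
Proof.
  induction t as [|t IH]; intros Ht l l' Hl Hl' Hne H1 H2; [rewrite v_first in *; lia|].
  specialize (IH ltac:(lia)).
  assert (Key : forall y, y <= k -> y <> I t -> u y < v (S t) y -> v (S t) y < u (I t)).
  { intros y Hy Hyx Hy2. rewrite chain_step_left_other in * by (auto; lia).
    pose proof (chain_moved_below_I t y ltac:(lia) Hy Hyx Hy2).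
    destruct (chain_step t ltac:(lia)) as (Hk & _).
    pose proof (chain_left_mono O t (I t) ltac:(lia) ltac:(lia)) as M. rewrite v_first in M.
    destruct (Z.eq_dec (u (I t)) (v t (I t))); [lia|].
    destruct (IH (I t) y ltac:(lia) Hy ltac:(auto) ltac:(lia) Hy2); lia. }
  destruct (Z.eq_dec l (I t)) as [->|E]; [right; apply Key; auto|].
  destruct (Z.eq_dec l' (I t)) as [->|E']; [left; apply Key; auto|].
  rewrite !chain_step_left_other in * by (auto; lia). apply IH; auto.
Qed.

Lemma chain_compatible : compatible_intervals a k u w.
Proof.
  split; [|split].
  - intros l Hl. pose proof (chain_left_mono O m l ltac:(lia) ltac:(lia)).
    rewrite v_first, v_last in *. auto.
  - intros l l' Hl Hl' Hne H1 H2.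
    pose proof (chain_intervals_disjoint m ltac:(lia) l l' ltac:(lia) ltac:(lia) Hne).
    rewrite !v_last in *. auto.
  - intros l l' Hl Hl' H1 H2. apply (chain_crossing_order m ltac:(lia) l l'); try lia.
    rewrite v_last; lia.
Qed.

Lemma chain_fixed_right_outside r : k < r <= n -> u r = w r ->
  forall l, l <= k -> ~ (u l < u r < w l).
Proof.
  intros Hr Efix l Hl.
  enough (forall t, (t <= m)%nat -> ~ (u l < u r < v t l)) by (rewrite <- v_last; auto).
  induction t as [|t IH]; intros Ht; [rewrite v_first; lia|].
  specialize (IH ltac:(lia)).
  destruct (Z.eq_dec l (I t)) as [->|E]; [|rewrite chain_step_left_other; auto; lia].
  rewrite chain_step_I by lia. intros Hc. apply IH. split; [lia|].
  destruct (chain_swap_values t ltac:(lia)) as [X Y].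
  destruct (chain_step t ltac:(lia)) as (_ & _ & [Hcov _]).
  pose proof (chain_J_range t ltac:(lia)).
  destruct (Z_lt_le_dec (u r) (v t (I t))) as [|L]; auto. exfalso.
  destruct (Z.lt_total (J t) r) as [L2|[L2|L2]].
  - pose proof (Dw (J t) r ltac:(lia)). destruct (Z.eq_dec (u r) (v t (I t))); lia.
  - rewrite L2 in *. lia.
  - pose proof (Du r (J t) ltac:(lia)). lia.
Qed.

Lemma chain_moved_right_inside r : k < r <= n -> u r <> w r ->
  exists l, a <= l <= k /\ u l < u r <= w l.
Proof.
  intros Hr Ne.
  destruct (classic (exists t, (t < m)%nat /\ J t = r)) as [[t [Ht <-]]|Hn].
  - exists (I t). pose proof (chain_I_range t Ht). split; auto.
    destruct (chain_swap_values t Ht) as [X Y].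
    destruct (chain_step t Ht) as (_ & _ & [Hcov _]).
    pose proof (chain_left_mono O t (I t) ltac:(lia) ltac:(lia)) as M1.
    pose proof (chain_left_mono (S t) m (I t) ltac:(lia) ltac:(lia)) as M2.
    rewrite chain_step_I in M2 by lia. rewrite v_first in M1. rewrite v_last in M2. lia.
  - exfalso. apply Ne.
    enough (forall t, (t <= m)%nat -> v t r = u r) by (rewrite <- v_last; symmetry; auto).
    induction t as [|t IH]; intros Ht; [apply v_first|].
    destruct (chain_step t ltac:(lia)) as (Hk & _).
    rewrite chain_step_other by (try lia; intros E; apply Hn; exists t; auto).
    apply IH; lia.
Qed.

End Chain.

Lemma kchain_compatible a k n u w : in_S a n u -> in_S a n w -> decr_on k n u -> decr_on k n w ->
  kchain k u w -> compatible_intervals a k u w.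
Proof. intros Hu Hw Du Dw (m & v & I & J & H0 & Hm & Hc & Hinc). eapply chain_compatible; eauto. Qed.

Lemma kchain_fixed_right_iff a k n u w : in_S a n u -> in_S a n w -> decr_on k n u ->
  decr_on k n w -> kchain k u w -> forall r, k < r <= n ->
  (u r = w r <-> forall l, a <= l <= k -> ~ (u l < u r <= w l)).
Proof.
  intros Hu Hw Du Dw (m & v & I & J & H0 & Hm & Hc & Hinc) r Hr. split.
  - intros Efix l Hl Hin.
    destruct (Z.eq_dec (u r) (w l)) as [E|E].
    + rewrite Efix in E. destruct Hw as [Hinj _]. apply Hinj in E. lia.
    + exact (chain_fixed_right_outside a k n u w Hu Hw Du Dw m v I J H0 Hm Hc Hinc r Hr Efix l
        ltac:(lia) ltac:(lia)).
  - intros Hout. destruct (Z.eq_dec (u r) (w r)) as [|Ne]; auto.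
    destruct (chain_moved_right_inside a k n u w Hu Hw m v I J H0 Hm Hc Hinc r Hr Ne)
      as (l & Hl & Hin).
    exfalso. apply (Hout l); auto.
Qed.

(** * Building a k-chain *)

Lemma exists_min_in_list (P : Z -> bool) (f : Z -> Z) (L : list Z) :
  (exists x, In x L /\ P x = true) ->
  exists x, In x L /\ P x = true /\ forall y, In y L -> P y = true -> f x <= f y.
Proof.
  induction L as [|x L IH]; intros [y [Hy Py]]; [contradiction|].
  destruct (existsb P L) eqn:E.
  - apply existsb_exists in E. destruct (IH E) as [z [Hz [Pz Mz]]].
    destruct (P x) eqn:Px; [destruct (Z_le_gt_dec (f x) (f z))|].
    + exists x. split; [left; auto|split; auto]. intros y' [<-|Hy'] Py'; [lia|].
      specialize (Mz y' Hy' Py'). lia.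
    + exists z. split; [right; auto|split; auto]. intros y' [<-|Hy'] Py'; [lia|auto].
    + exists z. split; [right; auto|split; auto]. intros y' [<-|Hy'] Py'; [congruence|auto].
  - assert (y = x) as ->.
    { destruct Hy as [|Hy]; auto. exfalso.
      assert (existsb P L = true) by (apply existsb_exists; eauto). congruence. }
    exists x. split; [left; auto|split; auto]. intros y' [<-|Hy'] Py'; [lia|].
    exfalso. assert (existsb P L = true) by (apply existsb_exists; eauto). congruence.
Qed.

Lemma vtau_in_S a n u i j : in_S a n u -> a <= i <= n -> a <= j <= n -> in_S a n (vtau u i j).
Proof.
  intros (Hinj & Hsurj & Hfix) Hi Hj. split; [apply vtau_injective; auto|split].
  - intros y. destruct (Hsurj y) as [x <-]. exists (tau i j x). unfold vtau.
    rewrite tau_involutive. reflexivity.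
  - intros x Hx. rewrite vtau_other by lia. auto.
Qed.

Lemma in_S_preimage_range a n u x y : in_S a n u -> u x = y -> a <= y <= n -> a <= x <= n.
Proof.
  intros (_ & _ & Hfix) <- Hy.
  destruct (Z_le_gt_dec a x), (Z_le_gt_dec x n); try lia; rewrite Hfix in Hy; lia.
Qed.

(* On (k,n] both permutations take the values left over by [a,k], in decreasing order. *)
Lemma decr_perm_eq_of_eq_left a k n u w : a <= k -> in_S a n u -> in_S a n w ->
  decr_on k n u -> decr_on k n w -> (forall l, a <= l <= k -> u l = w l) -> forall x, u x = w x.
Proof.
  intros Hak Hu Hw Du Dw Hleft.
  assert (Hright : forall N : nat, forall r, k < r <= n -> (Z.to_nat (r - k) <= N)%nat -> u r = w r).
  { induction N as [|N IH]; intros r Hr HN; [lia|].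
    assert (Hlow : forall r', k < r' < r -> u r' = w r') by (intros r' Hr'; apply IH; lia).
    pose proof Hu as (Ui & Us & _). pose proof Hw as (Wi & Ws & _).
    destruct (Ws (u r)) as [r1 E1], (Us (w r)) as [r2 E2].
    pose proof (in_S_maps a n u Hu r ltac:(lia)). pose proof (in_S_maps a n w Hw r ltac:(lia)).
    pose proof (in_S_preimage_range a n w r1 (u r) Hw E1 ltac:(lia)).
    pose proof (in_S_preimage_range a n u r2 (w r) Hu E2 ltac:(lia)).
    assert (r <= r1).
    { destruct (Z_le_gt_dec r1 k).
      - rewrite <- Hleft in E1 by lia. apply Ui in E1. lia.
      - destruct (Z_lt_le_dec r1 r); [|lia]. rewrite <- Hlow in E1 by lia. apply Ui in E1. lia. }
    assert (r <= r2).
    { destruct (Z_le_gt_dec r2 k).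
      - rewrite Hleft in E2 by lia. apply Wi in E2. lia.
      - destruct (Z_lt_le_dec r2 r); [|lia]. rewrite Hlow in E2 by lia. apply Wi in E2. lia. }
    destruct (Z.eq_dec r1 r) as [->|]; [congruence|]. destruct (Z.eq_dec r2 r) as [->|]; [congruence|].
    pose proof (Dw r r1 ltac:(lia)). pose proof (Du r r2 ltac:(lia)). lia. }
  intros x. destruct (Z_le_gt_dec a x), (Z_le_gt_dec x n);
    [|destruct Hu as (_ & _ & Uf), Hw as (_ & _ & Wf); rewrite Uf, Wf; lia ..].
  destruct (Z_le_gt_dec x k); [apply Hleft; lia|]. apply (Hright (Z.to_nat (x - k))); lia.
Qed.

Definition in_left_image (a k : Z) (u : Z -> Z) (c : Z) : bool :=
  existsb (fun l => u l =? c) (zrange a k).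

Lemma in_left_image_spec a k u c :
  in_left_image a k u c = true <-> exists l, a <= l <= k /\ u l = c.
Proof.
  unfold in_left_image. rewrite existsb_exists. split.
  - intros [l [Hl E]]. apply in_zrange in Hl. apply Z.eqb_eq in E. eauto.
  - intros [l [Hl E]]. exists l. rewrite in_zrange, Z.eqb_eq. auto.
Qed.

Definition gap (a k : Z) (u w : Z -> Z) : Z := zsum (fun x => w x - u x) (zrange a k).

Lemma gap_nonneg a k u w : compatible_intervals a k u w -> 0 <= gap a k u w.
Proof.
  intros [Hle _]. unfold gap. rewrite <- (zsum_zero (zrange a k)). apply zsum_le.
  intros x Hx. apply in_zrange in Hx. specialize (Hle x Hx). lia.
Qed.

Definition is_kchain (k : Z) (u w : Z -> Z) (m : nat) (v : nat -> Z -> Z) (I J : nat -> Z) : Prop :=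
  (forall x, v O x = u x) /\ (forall x, v m x = w x) /\
  (forall t, (t < m)%nat -> kcover k (v t) (I t) (J t) (v (S t))) /\
  (forall t, (S t < m)%nat -> v t (I t) < v (S t) (I (S t))).

Section Greedy.

Variables (a k n : Z) (w : Z -> Z).
Hypotheses (Hk : a <= k <= n) (Hw : in_S a n w) (Dw : decr_on k n w).

(* Swap [l] with the position [j] of the first value above [u l] not taken on [a,k];
   it lies in (u l, w l] because [w l] itself is such a value. *)
Lemma greedy_target u l : in_S a n u -> compatible_intervals a k u w -> a <= l <= k ->
  u l < w l -> exists j, k < j <= n /\ u l < u j <= w l /\
  forall c, u l < c < u j -> exists l', a <= l' <= k /\ u l' = c.
Proof.
  intros Hu (Hle & Hdisj & _) Hl Hlt.
  pose proof (in_S_maps a n u Hu l ltac:(lia)). pose proof (in_S_maps a n w Hw l ltac:(lia)).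
  destruct (exists_min_in_list (fun c => negb (in_left_image a k u c)) (fun c => c)
              (zrange (u l + 1) (w l))) as [y [Hy [Py My]]].
  { exists (w l). split; [apply in_zrange; lia|].
    apply negb_true_iff, not_true_iff_false. rewrite in_left_image_spec.
    intros [l' [Hl' E]]. destruct (Z.eq_dec l' l) as [->|Hne]; [lia|].
    pose proof (Hle l' Hl').
    destruct (Z.eq_dec (u l') (w l')) as [E2|E2].
    - rewrite E in E2. destruct Hw as [Wi _]. apply Wi in E2. auto.
    - destruct (Hdisj l l' Hl Hl' (not_eq_sym Hne) Hlt ltac:(lia)); lia. }
  apply in_zrange in Hy. apply negb_true_iff, not_true_iff_false in Py.
  rewrite in_left_image_spec in Py.
  pose proof Hu as (_ & Us & _). destruct (Us y) as [j Ej].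
  exists j. split; [|split; [lia|]].
  - pose proof (in_S_preimage_range a n u j y Hu Ej ltac:(lia)).
    destruct (Z_le_gt_dec j k); [|lia]. exfalso. apply Py. exists j. split; auto. lia.
  - intros c Hc. apply NNPP. intros Hno.
    assert (y <= c); [|lia].
    apply My; [apply in_zrange; lia|]. apply negb_true_iff, not_true_iff_false.
    rewrite in_left_image_spec. auto.
Qed.

Section Swap.

Variables (u : Z -> Z) (l j : Z).
Hypotheses (Hu : in_S a n u) (Hl : a <= l <= k) (Hj : k < j <= n)
  (Hlj : u l < u j) (Hjw : u j <= w l)
  (Hbetween : forall c, u l < c < u j -> exists l', a <= l' <= k /\ u l' = c).

Lemma greedy_cover : compatible_intervals a k u w -> bruhat_cover u l j.
Proof.
  intros (Hle & Hdisj & Horder). split; auto. intros p Hp Hv.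
  destruct (Hbetween (u p) Hv) as [p' [Hp' E]].
  destruct Hu as [Ui _]. apply Ui in E. subst p'.
  pose proof (Hle p Hp').
  destruct (Z.eq_dec (u p) (w p)) as [E|E].
  - pose proof (Horder l p Hl Hp' ltac:(lia) E). lia.
  - destruct (Hdisj l p Hl Hp' ltac:(lia) ltac:(lia) ltac:(lia)); lia.
Qed.

Lemma greedy_swap_decr : decr_on k n u -> decr_on k n (vtau u l j).
Proof.
  intros Du x y Hxy. destruct Hu as [Ui _].
  destruct (Z.eq_dec x j) as [->|Hx]; [|destruct (Z.eq_dec y j) as [->|Hy]].
  - rewrite vtau_j, vtau_other by lia.
    pose proof (Du j y Hxy).
    destruct (Z.lt_total (u y) (u l)) as [|[E|Hgt]]; auto.
    + apply Ui in E. lia.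
    + destruct (Hbetween (u y) ltac:(lia)) as [l'' [Hl'' E]]. apply Ui in E. lia.
  - rewrite vtau_j, vtau_other by lia. pose proof (Du x j Hxy). lia.
  - rewrite !vtau_other by lia. apply Du. lia.
Qed.

Lemma greedy_swap_compatible : compatible_intervals a k u w ->
  compatible_intervals a k (vtau u l j) w.
Proof.
  intros (Hle & Hdisj & Horder).
  assert (Hlw : u l < w l) by lia.
  assert (Hother : forall l', a <= l' <= k -> l' <> l -> vtau u l j l' = u l')
    by (intros; apply vtau_other; lia).
  split; [|split].
  - intros l' Hl'. destruct (Z.eq_dec l' l) as [->|]; [rewrite vtau_i; lia|].
    rewrite Hother; auto.
  - intros p q Hp Hq Hpq H1 H2.
    destruct (Z.eq_dec p l) as [->|Hpl]; [|destruct (Z.eq_dec q l) as [->|Hql]].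
    + rewrite vtau_i in *. rewrite (Hother q) in * by lia.
      destruct (Hdisj l q Hp Hq Hpq Hlw H2); lia.
    + rewrite vtau_i in *. rewrite (Hother p) in * by lia.
      destruct (Hdisj p l Hp Hq Hpq H1 Hlw); lia.
    + rewrite (Hother p), (Hother q) in * by lia. apply Hdisj; auto.
  - intros p q Hp Hq H1 H2.
    destruct (Z.eq_dec q l) as [->|Hql].
    + rewrite vtau_i in *. destruct (Z.eq_dec p l) as [->|Hpl]; [lia|].
      rewrite Hother in H1 by lia. destruct (Hdisj p l Hp Hq Hpl ltac:(lia) Hlw); lia.
    + rewrite (Hother q) in * by lia. destruct (Z.eq_dec p l) as [->|Hpl].
      * rewrite vtau_i in H1. apply (Horder l q); auto. lia.
      * rewrite Hother in H1 by lia. apply (Horder p q); auto.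
Qed.

Lemma greedy_gap_decr : gap a k (vtau u l j) w < gap a k u w.
Proof.
  apply (zsum_lt _ _ _ l).
  - intros x Hx. apply in_zrange in Hx.
    destruct (Z.eq_dec x l) as [->|]; [rewrite vtau_i; lia|]. rewrite vtau_other; lia.
  - apply in_zrange; lia.
  - rewrite vtau_i. lia.
Qed.

End Swap.

Lemma greedy_step u : in_S a n u -> decr_on k n u -> compatible_intervals a k u w ->
  (exists l, a <= l <= k /\ u l < w l) ->
  exists l j, a <= l <= k /\ u l < w l /\ kcover k u l j (vtau u l j) /\
    in_S a n (vtau u l j) /\ decr_on k n (vtau u l j) /\
    compatible_intervals a k (vtau u l j) w /\
    (forall l', a <= l' <= k -> vtau u l j l' < w l' -> u l < vtau u l j l') /\
    gap a k (vtau u l j) w < gap a k u w.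
Proof.
  intros Hu Du Hc [l0 [Hl0 Hlt0]].
  destruct (exists_min_in_list (fun l => u l <? w l) u (zrange a k)) as [l [Hl [Pl Hmin]]].
  { exists l0. rewrite in_zrange, Z.ltb_lt. auto. }
  apply in_zrange in Hl. apply Z.ltb_lt in Pl.
  destruct (greedy_target u l Hu Hc Hl Pl) as (j & Hj & Hlj & Hbetween).
  assert (Hj' : a <= j <= n) by lia.
  exists l, j. split; [auto|split; [auto|split; [|split; [|split; [|split; [|split]]]]]].
  - pose proof Hu as (Ui & _ & Uf).
    apply (kcover_intro k u l j a n Ui Uf); try lia.
    apply (greedy_cover u l j); auto; lia.
  - apply vtau_in_S; auto; lia.
  - apply (greedy_swap_decr u l j); auto; lia.
  - apply (greedy_swap_compatible u l j); auto; lia.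
  - intros l' Hl' Hlt. destruct (Z.eq_dec l' l) as [->|Hne]; [rewrite vtau_i; lia|].
    rewrite vtau_other in * by lia.
    assert (u l <= u l') by (apply Hmin; [apply in_zrange|apply Z.ltb_lt]; auto).
    assert (u l <> u l') by (intros E; destruct Hu as [Ui _]; apply Ui in E; auto).
    lia.
  - apply (greedy_gap_decr u l j); auto; lia.
Qed.

Lemma greedy_done u : in_S a n u -> decr_on k n u -> compatible_intervals a k u w ->
  ~ (exists l, a <= l <= k /\ u l < w l) ->
  is_kchain k u w O (fun _ => u) (fun _ => 0) (fun _ => 0).
Proof.
  intros Hu Du [Hle _] Hno. split; [reflexivity|split; [|split; intros; lia]].
  apply (decr_perm_eq_of_eq_left a k n); auto; [lia|].
  intros l Hl. specialize (Hle l Hl).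
  destruct (Z.eq_dec (u l) (w l)); auto. exfalso. apply Hno. exists l. split; auto. lia.
Qed.

(* [b] bounds from below the value moved by the first step; this gives the increasing
   condition when a step is prepended. *)
Lemma greedy_kchain (N : nat) : forall u b, gap a k u w <= Z.of_nat N ->
  in_S a n u -> decr_on k n u -> compatible_intervals a k u w ->
  (forall l, a <= l <= k -> u l < w l -> b < u l) ->
  exists m v I J, is_kchain k u w m v I J /\ ((0 < m)%nat -> b < v O (I O)).
Proof.
  induction N as [|N IH]; intros u b HN Hu Du Hc Hb;
    (destruct (classic (exists l, a <= l <= k /\ u l < w l)) as [Hex|Hno];
     [destruct (greedy_step u Hu Du Hc Hex)
        as (l & j & Hl & Hlw & Hcov & Hu' & Du' & Hc' & Hb' & Hgap)
     |exists O, (fun _ => u), (fun _ => 0), (fun _ => 0); split; [apply greedy_done; auto|lia]]).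
  - pose proof (gap_nonneg a k _ _ Hc'). lia.
  - destruct (IH (vtau u l j) (u l) ltac:(lia) Hu' Du' Hc' Hb')
      as (m & v & I & J & (C0 & C1 & C2 & C3) & Cf).
    exists (S m), (fun t => match t with O => u | S t' => v t' end),
      (fun t => match t with O => l | S t' => I t' end),
      (fun t => match t with O => j | S t' => J t' end).
    split; [|intros _; apply Hb; auto].
    split; [reflexivity|split; [exact C1|split]].
    + intros [|t] Ht; [|apply C2; lia].
      replace (v O) with (vtau u l j) by (apply functional_extensionality; auto). exact Hcov.
    + intros [|t] Ht; [apply Cf; lia|apply C3; lia].
Qed.

Lemma compatible_kchain u : in_S a n u -> decr_on k n u -> compatible_intervals a k u w ->
  kchain k u w.
Proof.
  intros Hu Du Hc. pose proof (gap_nonneg a k u w Hc).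
  destruct (greedy_kchain (Z.to_nat (gap a k u w)) u (a - 1) ltac:(lia) Hu Du Hc)
    as (m & v & I & J & C & _).
  - intros l Hl _. pose proof (in_S_maps a n u Hu l ltac:(lia)). lia.
  - exists m, v, I, J. exact C.
Qed.

End Greedy.

(** * Bumpless pipedreams on one row *)

Definition uses_top (t : tile) : bool := match t with Vrt | JElb | Cross => true | _ => false end.
Definition uses_bottom (t : tile) : bool := match t with Vrt | RElb | Cross => true | _ => false end.

(* The tile with the given use of its top, bottom and left edges.  The combinations
   (top only) and (bottom and left) never occur in a BPD; their values are arbitrary. *)
Definition tile_of (t b l : bool) : tile :=
  match t, b, l with
  | false, false, false => Blank
  | false, false, true => Hor
  | true, true, false => Vrt
  | false, true, false => RElb
  | true, false, true => JElb
  | true, true, true => Cross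
  | true, false, false => Vrt
  | false, true, true => Cross
  end.

Lemma tile_of_uses t : tile_of (uses_top t) (uses_bottom t) (uses_left t) = t.
Proof. destruct t; reflexivity. Qed.

Lemma tile_of_blank t b l : tile_of t b l = Blank <-> t = false /\ b = false /\ l = false.
Proof. destruct t, b, l; simpl; intuition congruence. Qed.

Ltac invert_edge_eqs :=
  repeat match goal with
  | H : (@eq edge _ _) /\ _ |- _ => destruct H
  | H : ((@eq edge _ _) /\ _) \/ _ |- _ => destruct H
  | H : False |- _ => contradiction
  | H : ETop _ = ETop _ |- _ => injection H as H
  | H : EBot _ = EBot _ |- _ => injection H as H
  | H : EV _ = EV _ |- _ => injection H as H
  | H : ETop _ = EBot _ |- _ => discriminate H
  | H : ETop _ = EV _ |- _ => discriminate H
  | H : EBot _ = ETop _ |- _ => discriminate H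
  | H : EBot _ = EV _ |- _ => discriminate H
  | H : EV _ = ETop _ |- _ => discriminate H
  | H : EV _ = EBot _ |- _ => discriminate H
  end.

Lemma used_top a n D c : used a n D (ETop c) <-> a <= c <= n /\ uses_top (D c) = true.
Proof.
  split.
  - intros [e' [[c0 [Hc L]]|[c0 [Hc L]]]]; destruct (D c0) eqn:E; simpl in L; invert_edge_eqs;
      subst; rewrite ?E; auto.
  - intros [Hc T]. destruct (D c) eqn:E; simpl in T; try discriminate.
    + exists (EBot c). left. exists c. rewrite E. simpl. auto.
    + exists (EV (c - 1)). left. exists c. rewrite E. simpl. auto.
    + exists (EBot c). left. exists c. rewrite E. simpl. auto.
Qed.

Lemma used_bottom a n D c : used a n D (EBot c) <-> a <= c <= n /\ uses_bottom (D c) = true.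
Proof.
  split.
  - intros [e' [[c0 [Hc L]]|[c0 [Hc L]]]]; destruct (D c0) eqn:E; simpl in L; invert_edge_eqs;
      subst; rewrite ?E; auto.
  - intros [Hc T]. destruct (D c) eqn:E; simpl in T; try discriminate.
    + exists (ETop c). right. exists c. rewrite E. simpl. auto.
    + exists (EV c). left. exists c. rewrite E. simpl. auto.
    + exists (ETop c). right. exists c. rewrite E. simpl. auto.
Qed.

Lemma used_EV a n D c : used a n D (EV c) <->
  (a <= c <= n /\ uses_right (D c) = true) \/ (a <= c + 1 <= n /\ uses_left (D (c + 1)) = true).
Proof.
  split.
  - intros [e' [[c0 [Hc L]]|[c0 [Hc L]]]]; destruct (D c0) eqn:E; simpl in L; invert_edge_eqs;
      subst; first [ left; rewrite E; auto
                   | right; replace (c0 - 1 + 1) with c0 by lia; rewrite E; auto ].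
  - intros [[Hc T]|[Hc T]].
    + destruct (D c) eqn:E; simpl in T; try discriminate;
        [exists (EV (c - 1))|exists (EBot c)|exists (EV (c - 1))];
        right; exists c; rewrite E; simpl; auto.
    + destruct (D (c + 1)) eqn:E; simpl in T; try discriminate;
        [exists (EV (c + 1)); left|exists (ETop (c + 1)); right|exists (EV (c + 1)); left];
        exists (c + 1); rewrite E; simpl; replace (c + 1 - 1) with c by lia; auto.
Qed.

Definition is_some (o : option Z) : bool := if o then true else false.

Definition label_of (g : Z -> option Z) (c : Z) : Z :=
  match g c with Some l => l | None => 0 end.

Lemma label_of_Some g c l : g c = Some l -> label_of g c = l.
Proof. unfold label_of. intros ->. reflexivity. Qed.

Definition horiz (a k : Z) (u w : Z -> Z) (c : Z) : bool :=
  existsb (fun l => (u l <=? c) && (c <? w l)) (zrange a k).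

Lemma horiz_spec a k u w c : horiz a k u w c = true <-> exists l, a <= l <= k /\ u l <= c < w l.
Proof.
  unfold horiz. rewrite existsb_exists. split.
  - intros [l [Hl E]]. apply in_zrange in Hl. rewrite andb_true_iff, Z.leb_le, Z.ltb_lt in E. eauto.
  - intros [l [Hl E]]. exists l. rewrite in_zrange, andb_true_iff, Z.leb_le, Z.ltb_lt. auto.
Qed.

Definition horiz_label (a k : Z) (u w : Z -> Z) (c : Z) : Z :=
  match find (fun l => (u l <=? c) && (c <? w l)) (zrange a k) with Some l => l | None => 0 end.

(* Pipe [l] enters at column [w l], runs left along [u l, w l) and exits at column [u l]. *)
Definition bpd_of (a k : Z) (gN gS : Z -> option Z) (u w : Z -> Z) : tiling :=
  fun c => tile_of (is_some (gN c)) (is_some (gS c)) (horiz a k u w (c - 1)).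

Definition bpd_label (a k : Z) (gN gS : Z -> option Z) (u w : Z -> Z) (e : edge) : Z :=
  match e with
  | ETop c => label_of gN c
  | EBot c => label_of gS c
  | EV c => horiz_label a k u w c
  end.

Section Row.

Variables (a k n : Z) (gN gS : Z -> option Z) (u w : Z -> Z).
Hypotheses (Hk : a <= k <= n)
  (VN : values_exactly a k n gN) (VS : values_exactly a k n gS)
  (Hw : in_S a n w) (HgN : forall l, a <= l <= k -> gN (w l) = Some l)
  (Hu : in_S a n u) (HgS : forall l, a <= l <= k -> gS (u l) = Some l).

Lemma gN_Some c l : a <= c <= n -> (gN c = Some l <-> a <= l <= k /\ w l = c).
Proof.
  intros Hc. split; [|intros [Hl <-]; auto].
  intros E. destruct VN as (V1 & _ & V3). pose proof (V1 c l Hc E).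
  split; auto. apply (V3 (w l) c l); auto. apply (in_S_maps a n w Hw). lia.
Qed.

Lemma gS_Some c l : a <= c <= n -> (gS c = Some l <-> a <= l <= k /\ u l = c).
Proof.
  intros Hc. split; [|intros [Hl <-]; auto].
  intros E. destruct VS as (V1 & _ & V3). pose proof (V1 c l Hc E).
  split; auto. apply (V3 (u l) c l); auto. apply (in_S_maps a n u Hu). lia.
Qed.

Lemma top_spec c : a <= c <= n ->
  (is_some (gN c) = true <-> exists l, a <= l <= k /\ w l = c).
Proof.
  intros Hc. unfold is_some. destruct (gN c) as [l|] eqn:E.
  - split; auto. intros _. exists l. apply gN_Some; auto.
  - split; [discriminate|]. intros [l Hl]. rewrite (proj2 (gN_Some c l Hc) Hl) in E. discriminate.
Qed.

Lemma bottom_spec c : a <= c <= n ->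
  (is_some (gS c) = true <-> exists l, a <= l <= k /\ u l = c).
Proof.
  intros Hc. unfold is_some. destruct (gS c) as [l|] eqn:E.
  - split; auto. intros _. exists l. apply gS_Some; auto.
  - split; [discriminate|]. intros [l Hl]. rewrite (proj2 (gS_Some c l Hc) Hl) in E. discriminate.
Qed.

Lemma top_label c : a <= c <= n -> is_some (gN c) = true ->
  exists l, a <= l <= k /\ w l = c /\ label_of gN c = l.
Proof.
  intros Hc. unfold is_some. destruct (gN c) as [l|] eqn:E; [|discriminate]. intros _.
  exists l. apply gN_Some in E as [? ?]; auto. split; auto. split; auto.
  apply label_of_Some. apply gN_Some; auto.
Qed.

Lemma bottom_label c : a <= c <= n -> is_some (gS c) = true ->
  exists l, a <= l <= k /\ u l = c /\ label_of gS c = l.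
Proof.
  intros Hc. unfold is_some. destruct (gS c) as [l|] eqn:E; [|discriminate]. intros _.
  exists l. apply gS_Some in E as [? ?]; auto. split; auto. split; auto.
  apply label_of_Some. apply gS_Some; auto.
Qed.

Section Construction.

Hypothesis Hcomp : compatible_intervals a k u w.

Lemma intervals_overlap_eq l1 l2 c : a <= l1 <= k -> a <= l2 <= k ->
  u l1 < w l1 -> u l2 < w l2 -> u l1 <= c <= w l1 -> u l2 <= c <= w l2 -> l1 = l2.
Proof.
  intros H1 H2 H3 H4 H5 H6. destruct Hcomp as (_ & Hdisj & _).
  destruct (Z.eq_dec l1 l2) as [|Hne]; auto. destruct (Hdisj l1 l2 H1 H2 Hne H3 H4); lia.
Qed.

Lemma w_eq_u_index l1 l2 : a <= l1 <= k -> a <= l2 <= k -> w l1 = u l2 -> l1 = l2.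
Proof.
  intros H1 H2 E. destruct Hcomp as (Hle & Hdisj & _).
  destruct Hu as [Ui _], Hw as [Wi _].
  destruct (Z.eq_dec l1 l2) as [|Ne]; auto. exfalso.
  pose proof (Hle l1 H1). pose proof (Hle l2 H2).
  destruct (Z.eq_dec (u l1) (w l1)) as [E1|E1]; [apply Ne, Ui; congruence|].
  destruct (Z.eq_dec (u l2) (w l2)) as [E2|E2]; [apply Ne, Wi; congruence|].
  destruct (Hdisj l1 l2 H1 H2 Ne ltac:(lia) ltac:(lia)); lia.
Qed.

Lemma horiz_label_spec c l : a <= l <= k -> u l <= c < w l -> horiz_label a k u w c = l.
Proof.
  intros Hl Hc. unfold horiz_label.
  destruct (find (fun l => (u l <=? c) && (c <? w l)) (zrange a k)) as [z|] eqn:E.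
  - apply find_some in E as [Hz E]. apply in_zrange in Hz.
    rewrite andb_true_iff, Z.leb_le, Z.ltb_lt in E.
    apply (intervals_overlap_eq z l c); auto; lia.
  - exfalso. eapply find_none in E; [|apply in_zrange; exact Hl].
    rewrite andb_false_iff, Z.leb_gt, Z.ltb_ge in E. lia.
Qed.

Lemma horiz_left_end : horiz a k u w (a - 1) = false.
Proof.
  apply not_true_iff_false. rewrite horiz_spec. intros [l [Hl E]].
  pose proof (in_S_maps a n u Hu l ltac:(lia)). lia.
Qed.

Lemma horiz_right_end : horiz a k u w n = false.
Proof.
  apply not_true_iff_false. rewrite horiz_spec. intros [l [Hl E]].
  pose proof (in_S_maps a n w Hw l ltac:(lia)). lia.
Qed.

Lemma horiz_at_top c : a <= c <= n -> is_some (gN c) = true -> is_some (gS c) = false ->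
  horiz a k u w (c - 1) = true /\ horiz a k u w c = false.
Proof.
  intros Hc T B. apply top_spec in T as [l [Hl <-]]; auto.
  assert (NB : forall l', a <= l' <= k -> u l' <> w l).
  { intros l' Hl' E. rewrite <- not_true_iff_false, bottom_spec in B by auto. eauto. }
  destruct Hcomp as (Hle & _). pose proof (Hle l Hl). pose proof (NB l Hl).
  split; [apply horiz_spec; exists l; split; auto; lia|].
  apply not_true_iff_false. rewrite horiz_spec. intros [l' [Hl' E']].
  pose proof (NB l' Hl').
  assert (l' = l) as -> by (apply (intervals_overlap_eq l' l (w l)); auto; lia). lia.
Qed.

Lemma horiz_at_bottom c : a <= c <= n -> is_some (gN c) = false -> is_some (gS c) = true ->
  horiz a k u w (c - 1) = false /\ horiz a k u w c = true.
Proof.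
  intros Hc T B. apply bottom_spec in B as [l [Hl <-]]; auto.
  assert (NT : forall l', a <= l' <= k -> w l' <> u l).
  { intros l' Hl' E. rewrite <- not_true_iff_false, top_spec in T by auto. eauto. }
  destruct Hcomp as (Hle & _). pose proof (Hle l Hl). pose proof (NT l Hl).
  split; [|apply horiz_spec; exists l; split; auto; lia].
  apply not_true_iff_false. rewrite horiz_spec. intros [l' [Hl' E']].
  pose proof (NT l' Hl').
  assert (l' = l) as -> by (apply (intervals_overlap_eq l' l (u l)); auto; lia). lia.
Qed.

Lemma horiz_through c : a <= c <= n -> is_some (gN c) = is_some (gS c) ->
  horiz a k u w (c - 1) = horiz a k u w c.
Proof.
  intros Hc TB. destruct Hu as [Ui _], Hw as [Wi _].
  apply eq_true_iff_eq. rewrite !horiz_spec.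
  destruct (is_some (gS c)) eqn:B.
  - apply bottom_spec in B as [l1 [Hl1 E1]]; auto. apply top_spec in TB as [l2 [Hl2 E2]]; auto.
    assert (l2 = l1) as -> by (apply w_eq_u_index; auto; lia).
    split; intros [l' [Hl' E']]; exists l'; split; auto.
    + destruct (Z.eq_dec c (w l')) as [E|]; [|lia].
      rewrite <- E2 in E. apply Wi in E. subst l'. lia.
    + destruct (Z.eq_dec c (u l')) as [E|]; [|lia].
      rewrite <- E1 in E. apply Ui in E. subst l'. lia.
  - rewrite <- not_true_iff_false, bottom_spec in B by auto.
    rewrite <- not_true_iff_false, top_spec in TB by auto.
    split; intros [l' [Hl' E']]; exists l'; split; auto.
    + destruct (Z.eq_dec c (w l')); [|lia]. exfalso. apply TB. eauto.
    + destruct (Z.eq_dec c (u l')); [|lia]. exfalso. apply B. eauto.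
Qed.

Lemma bpd_of_edges c : a <= c <= n ->
  uses_top (bpd_of a k gN gS u w c) = is_some (gN c) /\
  uses_bottom (bpd_of a k gN gS u w c) = is_some (gS c) /\
  uses_left (bpd_of a k gN gS u w c) = horiz a k u w (c - 1) /\
  uses_right (bpd_of a k gN gS u w c) = horiz a k u w c.
Proof.
  intros Hc. unfold bpd_of.
  destruct (is_some (gN c)) eqn:T, (is_some (gS c)) eqn:B.
  - rewrite <- (horiz_through c) by congruence.
    destruct (horiz a k u w (c - 1)); simpl; auto.
  - destruct (horiz_at_top c) as [-> ->]; auto.
  - destruct (horiz_at_bottom c) as [-> ->]; auto.
  - rewrite <- (horiz_through c) by congruence.
    destruct (horiz a k u w (c - 1)); simpl; auto.
Qed.

Local Notation D0 := (bpd_of a k gN gS u w).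
Local Notation lab0 := (bpd_label a k gN gS u w).

Lemma nondegenerate_of_no_top l : a <= l <= k -> is_some (gN (u l)) = false -> u l < w l.
Proof.
  intros Hl T. destruct Hcomp as (Hle & _). pose proof (Hle l Hl).
  destruct (Z.eq_dec (u l) (w l)) as [E|]; [|lia].
  pose proof (in_S_maps a n u Hu l ltac:(lia)).
  rewrite <- not_true_iff_false, top_spec in T by lia. exfalso. apply T. eauto.
Qed.

Lemma nondegenerate_of_no_bottom l : a <= l <= k -> is_some (gS (w l)) = false -> u l < w l.
Proof.
  intros Hl B. destruct Hcomp as (Hle & _). pose proof (Hle l Hl).
  destruct (Z.eq_dec (u l) (w l)) as [E|]; [|lia].
  pose proof (in_S_maps a n w Hw l ltac:(lia)).
  rewrite <- not_true_iff_false, bottom_spec in B by lia. exfalso. apply B. eauto.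
Qed.

Lemma horiz_label_true c : horiz a k u w c = true -> exists l, a <= l <= k /\
  u l <= c < w l /\ horiz_label a k u w c = l.
Proof.
  intros Hh. apply horiz_spec in Hh as [l [Hl Hc]]. exists l.
  split; auto. split; auto. apply horiz_label_spec; auto.
Qed.

Lemma bpd_of_link_label e e' : link a n D0 e e' -> lab0 e = lab0 e'.
Proof.
  intros [c [Hc L]]. destruct (bpd_of_edges c Hc) as (Vt & Vb & Vl & Vr).
  destruct (D0 c) eqn:E; simpl in L, Vt, Vb, Vl, Vr; invert_edge_eqs; subst; simpl.
  - destruct (horiz_label_true (c - 1)) as (l1 & Hl1 & E1 & ->); auto.
    destruct (horiz_label_true c) as (l2 & Hl2 & E2 & ->); auto.
    apply (intervals_overlap_eq l1 l2 c); auto; lia.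
  - destruct (top_label c) as (l1 & Hl1 & <- & ->); auto.
    destruct (bottom_label (w l1)) as (l2 & Hl2 & E2 & ->); auto.
    apply w_eq_u_index; auto.
  - destruct (bottom_label c) as (l2 & Hl2 & <- & ->); auto.
    pose proof (nondegenerate_of_no_top l2 Hl2 (eq_sym Vt)).
    symmetry. apply horiz_label_spec; auto. lia.
  - destruct (top_label c) as (l2 & Hl2 & <- & ->); auto.
    pose proof (nondegenerate_of_no_bottom l2 Hl2 (eq_sym Vb)).
    symmetry. apply horiz_label_spec; auto. lia.
  - destruct (horiz_label_true (c - 1)) as (l1 & Hl1 & E1 & ->); auto.
    destruct (horiz_label_true c) as (l2 & Hl2 & E2 & ->); auto.
    apply (intervals_overlap_eq l1 l2 c); auto; lia.
  - destruct (top_label c) as (l1 & Hl1 & <- & ->); auto.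
    destruct (bottom_label (w l1)) as (l2 & Hl2 & E2 & ->); auto.
    apply w_eq_u_index; auto.
Qed.

Lemma bpd_of_conn_label e e' : conn a n D0 e e' -> lab0 e = lab0 e'.
Proof. induction 1; [apply bpd_of_link_label|..]; congruence. Qed.

Lemma bpd_of_horizontal_run l : a <= l <= k -> u l < w l ->
  forall c, u l <= c < w l -> conn a n D0 (EV c) (EBot (u l)).
Proof.
  intros Hl Hlt.
  pose proof (in_S_maps a n u Hu l ltac:(lia)). pose proof (in_S_maps a n w Hw l ltac:(lia)).
  assert (Hrun : forall d : nat, forall c, c = u l + Z.of_nat d -> c < w l ->
                 conn a n D0 (EV c) (EBot (u l))).
  { induction d as [|d IH]; intros c Ec Hcw.
    - simpl in Ec. rewrite Z.add_0_r in Ec. subst c.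
      destruct (bpd_of_edges (u l) ltac:(lia)) as (Vt & Vb & Vl & Vr).
      assert (is_some (gN (u l)) = false).
      { apply not_true_iff_false. rewrite top_spec by lia. intros [l1 [Hl1 E1]].
        assert (l1 = l) as -> by (apply w_eq_u_index; auto). lia. }
      assert (is_some (gS (u l)) = true) by (apply bottom_spec; eauto; lia).
      assert (horiz a k u w (u l) = true) by (apply horiz_spec; exists l; split; auto; lia).
      apply rst_sym, rst_step. exists (u l). split; [lia|].
      destruct (D0 (u l)); simpl in *; try congruence. auto.
    - rewrite Nat2Z.inj_succ in Ec.
      destruct (bpd_of_edges c ltac:(lia)) as (Vt & Vb & Vl & Vr).
      assert (horiz a k u w (c - 1) = true) by (apply horiz_spec; exists l; split; auto; lia).
      assert (horiz a k u w c = true) by (apply horiz_spec; exists l; split; auto; lia).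
      apply rst_trans with (EV (c - 1)); [|apply IH; lia].
      apply rst_sym, rst_step. exists c. split; [lia|].
      destruct (D0 c); simpl in *; try congruence; auto. }
  intros c Hc. apply (Hrun (Z.to_nat (c - u l))); lia.
Qed.

Lemma bpd_of_pipe l : a <= l <= k -> conn a n D0 (ETop (w l)) (EBot (u l)).
Proof.
  intros Hl. destruct Hcomp as (Hle & _).
  pose proof (in_S_maps a n u Hu l ltac:(lia)). pose proof (in_S_maps a n w Hw l ltac:(lia)).
  destruct (bpd_of_edges (w l) ltac:(lia)) as (Vt & Vb & Vl & Vr).
  assert (is_some (gN (w l)) = true) by (apply top_spec; eauto; lia).
  pose proof (Hle l Hl).
  destruct (Z.eq_dec (u l) (w l)) as [E|E].
  - assert (is_some (gS (w l)) = true) by (apply bottom_spec; eauto; lia).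
    rewrite E. apply rst_step. exists (w l). split; [lia|].
    destruct (D0 (w l)); simpl in *; try congruence; auto.
  - assert (is_some (gS (w l)) = false).
    { apply not_true_iff_false. rewrite bottom_spec by lia. intros [l1 [Hl1 E1]].
      assert (l = l1) as -> by (apply w_eq_u_index; auto). lia. }
    assert (horiz a k u w (w l - 1) = true) by (apply horiz_spec; exists l; split; auto; lia).
    apply rst_trans with (EV (w l - 1)).
    + apply rst_step. exists (w l). split; [lia|].
      destruct (D0 (w l)); simpl in *; try congruence; auto.
    + apply bpd_of_horizontal_run; auto; lia.
Qed.

Lemma bpd_of_used_edge e : used a n D0 e ->
  exists l, a <= l <= k /\ lab0 e = l /\
    conn a n D0 e (EBot (u l)) /\ conn a n D0 e (ETop (w l)).
Proof.
  intros U. destruct e as [c|c|c].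
  - apply used_top in U as [Hc T].
    destruct (bpd_of_edges c Hc) as (Vt & _). rewrite Vt in T.
    destruct (top_label c Hc T) as (l & Hl & <- & L).
    exists l. split; [auto|split; [auto|split; [apply bpd_of_pipe; auto|apply rst_refl]]].
  - apply used_bottom in U as [Hc B].
    destruct (bpd_of_edges c Hc) as (_ & Vb & _). rewrite Vb in B.
    destruct (bottom_label c Hc B) as (l & Hl & <- & L).
    exists l. split; [auto|split; [auto|split; [apply rst_refl|apply rst_sym, bpd_of_pipe; auto]]].
  - assert (horiz a k u w c = true) as Hh.
    { apply used_EV in U as [[Hc R]|[Hc L]].
      - destruct (bpd_of_edges c Hc) as (_ & _ & _ & Vr). congruence.
      - destruct (bpd_of_edges (c + 1) Hc) as (_ & _ & Vl & _).
        replace (c + 1 - 1) with c in Vl by lia. congruence. }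
    destruct (horiz_label_true c Hh) as (l & Hl & Ec & L).
    assert (conn a n D0 (EV c) (EBot (u l))) by (apply bpd_of_horizontal_run; auto; lia).
    exists l. split; [auto|split; [auto|split; [auto|]]].
    apply rst_trans with (EBot (u l)); auto. apply rst_sym, bpd_of_pipe; auto.
Qed.

Lemma bpd_of_cross_label c : a <= c <= n -> D0 c = Cross -> lab0 (ETop c) < lab0 (EV c).
Proof.
  intros Hc E. destruct Hcomp as (_ & _ & Horder).
  destruct (bpd_of_edges c Hc) as (Vt & Vb & Vl & Vr). rewrite E in *. simpl in *.
  destruct (top_label c Hc (eq_sym Vt)) as (l1 & Hl1 & E1 & L1).
  destruct (bottom_label c Hc (eq_sym Vb)) as (l2 & Hl2 & E2 & _).
  assert (l1 = l2) as <- by (apply w_eq_u_index; auto; lia).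
  destruct (horiz_label_true c (eq_sym Vr)) as (l & Hl & El & L).
  simpl. rewrite L1, L.
  destruct (Z.eq_dec (u l) c) as [E3|E3].
  - rewrite <- E2 in E3. destruct Hu as [Ui _]. apply Ui in E3. rewrite E3 in *. lia.
  - apply (Horder l l1); auto; lia.
Qed.

Lemma bpd_of_is_BPD : is_BPD a n D0.
Proof.
  split; [|split].
  - intros c Hc.
    destruct (bpd_of_edges c ltac:(lia)) as (_ & _ & _ & Vr).
    destruct (bpd_of_edges (c + 1) ltac:(lia)) as (_ & _ & Vl & _).
    replace (c + 1 - 1) with c in Vl by lia. congruence.
  - intros c c' Hc Hc' Ne Ec Ec' [[C1 C2]|[C1 C2]].
    + apply bpd_of_conn_label in C1. simpl in C1.
      destruct (bpd_of_edges c Hc) as (Vt & _). rewrite Ec in Vt.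
      destruct (bpd_of_edges c' Hc') as (Vt' & _). rewrite Ec' in Vt'.
      destruct (top_label c Hc (eq_sym Vt)) as (l1 & Hl1 & E1 & L1).
      destruct (top_label c' Hc' (eq_sym Vt')) as (l2 & Hl2 & E2 & L2).
      congruence.
    + apply bpd_of_conn_label in C1, C2.
      pose proof (bpd_of_cross_label c Hc Ec). pose proof (bpd_of_cross_label c' Hc' Ec'). lia.
  - intros e U. destruct (bpd_of_used_edge e U) as (l & Hl & _ & C1 & C2).
    pose proof (in_S_maps a n u Hu l ltac:(lia)). pose proof (in_S_maps a n w Hw l ltac:(lia)).
    split.
    + exists (ETop (w l)). split; [left; exists (w l); split; auto; lia|split; auto].
      apply used_top. split; [lia|].
      destruct (bpd_of_edges (w l) ltac:(lia)) as (-> & _). apply top_spec; eauto; lia.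
    + exists (EBot (u l)). split; [left; exists (u l); split; auto; lia|split; auto].
      apply used_bottom. split; [lia|].
      destruct (bpd_of_edges (u l) ltac:(lia)) as (_ & -> & _). apply bottom_spec; eauto; lia.
Qed.

Lemma is_some_iff (o : option Z) : is_some o = true <-> o <> None.
Proof. destruct o; simpl; split; congruence. Qed.

Lemma bpd_of_satisfies : satisfies a n D0 gN None gS None.
Proof.
  exists lab0. split; [split|].
  - intros e e' U U'. split; [apply bpd_of_conn_label|].
    intros E. destruct (bpd_of_used_edge e U) as (l & Hl & L1 & C1 & _).
    destruct (bpd_of_used_edge e' U') as (l' & Hl' & L2 & C2 & _).
    assert (l' = l) as -> by congruence.
    apply rst_trans with (EBot (u l)); auto. apply rst_sym; auto.
  - apply bpd_of_cross_label.
  - split.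
    { split; [|congruence]. intros U. apply used_EV in U as [[Hc R]|[Hc _]]; [|lia].
      destruct (bpd_of_edges n Hc) as (_ & _ & _ & Vr).
      rewrite horiz_right_end in Vr. congruence. }
    split; [discriminate|]. split.
    { split; [|congruence]. intros U. apply used_EV in U as [[Hc _]|[Hc L]]; [lia|].
      replace (a - 1 + 1) with a in * by lia.
      destruct (bpd_of_edges a Hc) as (_ & _ & Vl & _).
      rewrite horiz_left_end in Vl. congruence. }
    split; [discriminate|]. split.
    + intros c Hc. split; [|intros l E; apply label_of_Some; auto].
      rewrite used_top, <- is_some_iff. destruct (bpd_of_edges c Hc) as (-> & _). tauto.
    + intros c Hc. split; [|intros l E; apply label_of_Some; auto].
      rewrite used_bottom, <- is_some_iff. destruct (bpd_of_edges c Hc) as (_ & -> & _). tauto.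
Qed.

Lemma bpd_of_blank c : a <= c <= n -> D0 c = Blank <->
  exists r, k < r <= n /\ u r = c /\ forall l, a <= l <= k -> ~ (u l < c <= w l).
Proof.
  intros Hc. unfold bpd_of. rewrite tile_of_blank, <- !not_true_iff_false,
    top_spec, bottom_spec, horiz_spec by auto.
  destruct Hu as (Ui & Us & _), Hw as [Wi _]. split.
  - intros (T & B & H). destruct (Us c) as [r <-].
    pose proof (in_S_preimage_range a n u r (u r) Hu eq_refl Hc).
    exists r. split; [|split; auto].
    + destruct (Z_le_gt_dec r k); [|lia]. exfalso. apply B. exists r. split; auto; lia.
    + intros l Hl Hin. apply H. exists l. split; auto.
      destruct (Z.eq_dec (u r) (w l)) as [E|]; [|lia]. exfalso. apply T. eauto.
  - intros (r & Hr & <- & Hout). split; [|split].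
    + intros [l [Hl E]]. destruct Hcomp as (Hle & _). pose proof (Hle l Hl).
      destruct (Z.eq_dec (u l) (u r)) as [E2|E2]; [apply Ui in E2; lia|].
      apply (Hout l); auto; lia.
    + intros [l [Hl E]]. apply Ui in E. lia.
    + intros [l [Hl E]]. apply (Hout l); auto. lia.
Qed.

End Construction.

Section Analysis.

Variables (D : tiling) (lab : edge -> Z).
Hypotheses (Hcons : consistent a n D) (Hlab : valid_labeling a n D lab)
  (no_east : ~ used a n D (EV n)) (no_west : ~ used a n D (EV (a - 1)))
  (Htop : forall c, a <= c <= n ->
     (used a n D (ETop c) <-> gN c <> None) /\ (forall l, gN c = Some l -> lab (ETop c) = l))
  (Hbottom : forall c, a <= c <= n ->
     (used a n D (EBot c) <-> gS c <> None) /\ (forall l, gS c = Some l -> lab (EBot c) = l)).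

Lemma tiling_top c : a <= c <= n -> uses_top (D c) = is_some (gN c).
Proof.
  intros Hc. apply eq_true_iff_eq. rewrite is_some_iff, <- (proj1 (Htop c Hc)), used_top. tauto.
Qed.

Lemma tiling_bottom c : a <= c <= n -> uses_bottom (D c) = is_some (gS c).
Proof.
  intros Hc. apply eq_true_iff_eq. rewrite is_some_iff, <- (proj1 (Hbottom c Hc)), used_bottom. tauto.
Qed.

Lemma used_left_iff c : a <= c <= n -> used a n D (EV (c - 1)) <-> uses_left (D c) = true.
Proof.
  intros Hc. rewrite used_EV. replace (c - 1 + 1) with c by lia. split; [|auto].
  intros [[Hc' R]|[_ L]]; auto. rewrite Hcons in R by lia. replace (c - 1 + 1) with c in R by lia.
  auto.
Qed.

Lemma used_right_iff c : a <= c <= n -> used a n D (EV c) <-> uses_right (D c) = true.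
Proof.
  intros Hc. rewrite used_EV. split; [|auto].
  intros [[_ R]|[Hc' L]]; auto. rewrite Hcons by lia. auto.
Qed.

Lemma lab_link e e' : link a n D e e' -> lab e = lab e'.
Proof.
  intros Lk. destruct Hlab as [Hconn _]. apply Hconn.
  - exists e'. left. auto.
  - exists e. right. auto.
  - apply rst_step. auto.
Qed.

Lemma tiling_top_label c : a <= c <= n -> uses_top (D c) = true ->
  exists l, a <= l <= k /\ w l = c /\ lab (ETop c) = l.
Proof.
  intros Hc T. rewrite tiling_top in T by auto. unfold is_some in T.
  destruct (gN c) as [l|] eqn:E; [|discriminate].
  exists l. apply gN_Some in E as E'; [|auto]. destruct E'. split; auto. split; auto.
  apply (Htop c Hc). auto.
Qed.

Lemma tiling_bottom_label c : a <= c <= n -> uses_bottom (D c) = true ->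
  exists l, a <= l <= k /\ u l = c /\ lab (EBot c) = l.
Proof.
  intros Hc B. rewrite tiling_bottom in B by auto. unfold is_some in B.
  destruct (gS c) as [l|] eqn:E; [|discriminate].
  exists l. apply gS_Some in E as E'; [|auto]. destruct E'. split; auto. split; auto.
  apply (Hbottom c Hc). auto.
Qed.

Lemma tiling_vertical_label c l : a <= c <= n -> a <= l <= k -> u l = c ->
  uses_top (D c) = true -> uses_bottom (D c) = true -> w l = c.
Proof.
  intros Hc Hl E T B.
  destruct (tiling_top_label c Hc T) as (l1 & Hl1 & E1 & L1).
  destruct (tiling_bottom_label c Hc B) as (l2 & Hl2 & E2 & L2).
  assert (lab (ETop c) = lab (EBot c)).
  { destruct (D c) eqn:ED; simpl in T, B; try discriminate;
      apply lab_link; exists c; rewrite ED; simpl; auto. }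
  destruct Hu as [Ui _]. rewrite <- E2 in E. apply Ui in E. congruence.
Qed.

Lemma pipe_starts_horizontal l : a <= l <= k -> u l <> w l ->
  used a n D (EV (u l)) /\ lab (EV (u l)) = l.
Proof.
  intros Hl Ne. pose proof (in_S_maps a n u Hu l ltac:(lia)) as Hc.
  assert (B : uses_bottom (D (u l)) = true).
  { rewrite tiling_bottom by auto. unfold is_some. rewrite HgS; auto. }
  destruct (tiling_bottom_label (u l) Hc B) as (l0 & Hl0 & E0 & L0).
  destruct Hu as [Ui _]. apply Ui in E0. subst l0.
  destruct (uses_top (D (u l))) eqn:T.
  { exfalso. apply Ne. symmetry. apply (tiling_vertical_label (u l)); auto. }
  destruct (D (u l)) eqn:E; simpl in B, T; try discriminate.
  assert (Lk : link a n D (EBot (u l)) (EV (u l))) by (exists (u l); rewrite E; simpl; auto).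
  split; [exists (EBot (u l)); right; auto|]. rewrite <- (lab_link _ _ Lk). auto.
Qed.

Lemma pipe_runs_horizontal l : a <= l <= k -> u l < w l ->
  forall c, u l <= c < w l -> used a n D (EV c) /\ lab (EV c) = l.
Proof.
  intros Hl Hlt. pose proof (in_S_maps a n w Hw l ltac:(lia)).
  pose proof (in_S_maps a n u Hu l ltac:(lia)).
  assert (Hrun : forall d : nat, forall c, c = u l + Z.of_nat d -> c < w l ->
                 used a n D (EV c) /\ lab (EV c) = l).
  { induction d as [|d IH]; intros c Ec Hcw.
    - simpl in Ec. rewrite Z.add_0_r in Ec. subst c. apply pipe_starts_horizontal; auto; lia.
    - rewrite Nat2Z.inj_succ in Ec.
      destruct (IH (c - 1) ltac:(lia) ltac:(lia)) as [U Lb].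
      assert (Hc : a <= c <= n) by lia.
      apply used_left_iff in U; auto.
      destruct (D c) eqn:E; simpl in U; try discriminate.
      + assert (Lk : link a n D (EV (c - 1)) (EV c)) by (exists c; rewrite E; simpl; auto).
        split; [exists (EV (c - 1)); right; auto|]. rewrite <- (lab_link _ _ Lk). auto.
      + exfalso. assert (Lk : link a n D (ETop c) (EV (c - 1))) by (exists c; rewrite E; simpl; auto).
        destruct (tiling_top_label c Hc ltac:(rewrite E; auto)) as (l1 & Hl1 & E1 & L1).
        pose proof (lab_link _ _ Lk).
        assert (l1 = l) as -> by congruence. lia.
      + assert (Lk : link a n D (EV (c - 1)) (EV c)) by (exists c; rewrite E; simpl; auto).
        split; [exists (EV (c - 1)); right; auto|]. rewrite <- (lab_link _ _ Lk). auto. }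
  intros c Hc. apply (Hrun (Z.to_nat (c - u l))); lia.
Qed.

(* Traced leftwards, the pipe cannot leave through the west boundary, so it starts at a
   bottom edge. *)
Lemma label_left_bound c : used a n D (EV c) ->
  exists l, a <= l <= k /\ lab (EV c) = l /\ u l <= c.
Proof.
  intros U. assert (Ha : a <= c).
  { destruct (Z.eq_dec c (a - 1)) as [->|]; [contradiction|].
    apply used_EV in U as [[? _]|[? _]]; lia. }
  remember (Z.to_nat (c - a)) as d eqn:Hd. revert c U Ha Hd.
  induction d as [|d IH]; intros c U Ha Hd;
    (assert (Hc : a <= c <= n) by (apply used_EV in U as [[? _]|[? _]]; lia));
    apply used_right_iff in U as R; auto;
    destruct (D c) eqn:E; simpl in R; try discriminate.
  - exfalso. apply no_west. replace (a - 1) with (c - 1) by lia.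
    exists (EV c). left. exists c. rewrite E. simpl. auto.
  - assert (Lk : link a n D (EBot c) (EV c)) by (exists c; rewrite E; simpl; auto).
    destruct (tiling_bottom_label c Hc ltac:(rewrite E; auto)) as (l1 & Hl1 & E1 & L1).
    exists l1. split; auto. split; [|lia]. rewrite <- (lab_link _ _ Lk). auto.
  - exfalso. apply no_west. replace (a - 1) with (c - 1) by lia.
    exists (EV c). left. exists c. rewrite E. simpl. auto.
  - assert (Lk : link a n D (EV (c - 1)) (EV c)) by (exists c; rewrite E; simpl; auto).
    destruct (IH (c - 1)) as (l1 & Hl1 & L1 & E1); [exists (EV c); left; auto|lia|lia|].
    exists l1. split; auto. split; [|lia]. rewrite <- (lab_link _ _ Lk). auto.
  - assert (Lk : link a n D (EBot c) (EV c)) by (exists c; rewrite E; simpl; auto).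
    destruct (tiling_bottom_label c Hc ltac:(rewrite E; auto)) as (l1 & Hl1 & E1 & L1).
    exists l1. split; auto. split; [|lia]. rewrite <- (lab_link _ _ Lk). auto.
  - assert (Lk : link a n D (EV (c - 1)) (EV c)) by (exists c; rewrite E; simpl; auto).
    destruct (IH (c - 1)) as (l1 & Hl1 & L1 & E1); [exists (EV c); left; auto|lia|lia|].
    exists l1. split; auto. split; [|lia]. rewrite <- (lab_link _ _ Lk). auto.
Qed.

Lemma label_right_bound c : used a n D (EV c) ->
  exists l, a <= l <= k /\ lab (EV c) = l /\ c < w l.
Proof.
  intros U. assert (Hn : c < n).
  { destruct (Z.eq_dec c n) as [->|]; [contradiction|].
    apply used_EV in U as [[? _]|[? _]]; lia. }
  remember (Z.to_nat (n - c)) as d eqn:Hd. revert c U Hn Hd.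
  induction d as [|d IH]; intros c U Hn Hd; [lia|].
  assert (Hc : a <= c + 1 <= n) by (apply used_EV in U as [[? _]|[? _]]; lia).
  assert (R : uses_left (D (c + 1)) = true)
    by (apply used_left_iff; auto; replace (c + 1 - 1) with c by lia; auto).
  destruct (D (c + 1)) eqn:E; simpl in R; try discriminate.
  - assert (Lk : link a n D (EV c) (EV (c + 1)))
      by (exists (c + 1); rewrite E; simpl; replace (c + 1 - 1) with c by lia; auto).
    destruct (Z.eq_dec (c + 1) n) as [Ecn|].
    { exfalso. apply no_east. replace (EV n) with (EV (c + 1)) by congruence.
      exists (EV c). right. auto. }
    destruct (IH (c + 1)) as (l1 & Hl1 & L1 & E1); [exists (EV c); right; auto|lia|lia|].
    exists l1. split; auto. split; [|lia]. rewrite (lab_link _ _ Lk). auto.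
  - assert (Lk : link a n D (ETop (c + 1)) (EV c))
      by (exists (c + 1); rewrite E; simpl; replace (c + 1 - 1) with c by lia; auto).
    destruct (tiling_top_label (c + 1) Hc ltac:(rewrite E; auto)) as (l1 & Hl1 & E1 & L1).
    exists l1. split; auto. split; [|lia]. rewrite <- (lab_link _ _ Lk). auto.
  - assert (Lk : link a n D (EV c) (EV (c + 1)))
      by (exists (c + 1); rewrite E; simpl; replace (c + 1 - 1) with c by lia; auto).
    destruct (Z.eq_dec (c + 1) n) as [Ecn|].
    { exfalso. apply no_east. replace (EV n) with (EV (c + 1)) by congruence.
      exists (EV c). right. auto. }
    destruct (IH (c + 1)) as (l1 & Hl1 & L1 & E1); [exists (EV c); right; auto|lia|lia|].
    exists l1. split; auto. split; [|lia]. rewrite (lab_link _ _ Lk). auto.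
Qed.

Lemma used_EV_label c : used a n D (EV c) ->
  exists l, a <= l <= k /\ lab (EV c) = l /\ u l <= c < w l.
Proof.
  intros U. destruct (label_left_bound c U) as (l1 & Hl1 & L1 & E1).
  destruct (label_right_bound c U) as (l2 & Hl2 & L2 & E2).
  assert (l1 = l2) as <- by congruence. exists l1. auto.
Qed.

Lemma tiling_nondegenerate l : a <= l <= k -> u l <> w l -> u l < w l.
Proof.
  intros Hl Ne. destruct (pipe_starts_horizontal l Hl Ne) as [U L].
  destruct (used_EV_label (u l) U) as (l' & Hl' & L' & E').
  assert (l' = l) as -> by congruence. lia.
Qed.

Lemma tiling_disjoint l l' : a <= l <= k -> a <= l' <= k -> l <> l' ->
  u l < w l -> u l' < w l' -> u l < u l' -> u l' <= w l -> False.
Proof.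
  intros Hl Hl' Ne N1 N2 O1 O2.
  destruct (Z.eq_dec (u l') (w l)) as [E|E].
  - pose proof (in_S_maps a n u Hu l' ltac:(lia)) as Hc.
    assert (B : uses_bottom (D (u l')) = true).
    { rewrite tiling_bottom by auto. unfold is_some. rewrite HgS; auto. }
    assert (T : uses_top (D (u l')) = true).
    { rewrite tiling_top by auto. unfold is_some. rewrite E, HgN; auto. }
    pose proof (tiling_vertical_label (u l') l' Hc Hl' eq_refl T B). lia.
  - destruct (pipe_runs_horizontal l Hl N1 (u l') ltac:(lia)) as [_ La].
    destruct (pipe_runs_horizontal l' Hl' N2 (u l') ltac:(lia)) as [_ Lb].
    congruence.
Qed.

Lemma tiling_compatible : compatible_intervals a k u w.
Proof.
  assert (Hle : forall l, a <= l <= k -> u l <= w l).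
  { intros l Hl. destruct (Z.eq_dec (u l) (w l)); [lia|].
    pose proof (tiling_nondegenerate l Hl n0). lia. }
  split; [exact Hle|split].
  - intros l l' Hl Hl' Ne N1 N2.
    destruct (Z_lt_le_dec (w l) (u l')); auto. destruct (Z_lt_le_dec (w l') (u l)); auto.
    exfalso. destruct (Z.lt_total (u l) (u l')) as [O|[O|O]].
    + apply (tiling_disjoint l l'); auto; lia.
    + destruct Hu as [Ui _]. apply Ui in O. auto.
    + apply (tiling_disjoint l' l); auto; lia.
  - intros l l'' Hl Hl'' [O1 O2] E.
    pose proof (in_S_maps a n u Hu l'' ltac:(lia)) as Hc.
    destruct (pipe_runs_horizontal l Hl ltac:(lia) (u l'' - 1) ltac:(lia)) as [U1 _].
    destruct (pipe_runs_horizontal l Hl ltac:(lia) (u l'') ltac:(lia)) as [_ L2].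
    apply used_left_iff in U1; auto.
    assert (B : uses_bottom (D (u l'')) = true).
    { rewrite tiling_bottom by auto. unfold is_some. rewrite HgS; auto. }
    assert (T : uses_top (D (u l'')) = true).
    { rewrite tiling_top by auto. unfold is_some. rewrite E, HgN; auto. }
    assert (Cr : D (u l'') = Cross) by (destruct (D (u l'')); simpl in *; congruence).
    destruct Hlab as [_ Hcross]. pose proof (Hcross (u l'') Hc Cr) as Ineq.
    destruct (tiling_top_label (u l'') Hc T) as (l1 & Hl1 & E1 & L1).
    destruct Hw as [Wi _]. rewrite E in E1. apply Wi in E1. subst l1. lia.
Qed.

Lemma tiling_eq_bpd_of c : a <= c <= n -> D c = bpd_of a k gN gS u w c.
Proof.
  intros Hc. rewrite <- (tile_of_uses (D c)). unfold bpd_of.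
  rewrite tiling_top, tiling_bottom by auto. f_equal.
  apply eq_true_iff_eq. rewrite <- used_left_iff, horiz_spec by auto. split.
  - intros U. destruct (used_EV_label (c - 1) U) as (l & Hl & _ & E). eauto.
  - intros [l [Hl E]]. apply (pipe_runs_horizontal l Hl ltac:(lia)). lia.
Qed.

End Analysis.

End Row.

Lemma satisfying_bpd_spec a k n gN gS u w D : a <= k <= n ->
  values_exactly a k n gN -> values_exactly a k n gS ->
  in_S a n w -> (forall l, a <= l <= k -> gN (w l) = Some l) ->
  in_S a n u -> (forall l, a <= l <= k -> gS (u l) = Some l) ->
  is_BPD a n D -> satisfies a n D gN None gS None ->
  compatible_intervals a k u w /\ forall c, a <= c <= n -> D c = bpd_of a k gN gS u w c.
Proof.
  intros Hk VN VS Hw HgN Hu HgS (Hcons & _ & _)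
    (lab & Hlab & [Heast _] & _ & [Hwest _] & _ & Htop & Hbottom).
  assert (no_east : ~ used a n D (EV n)) by (intros U; apply Heast in U; auto).
  assert (no_west : ~ used a n D (EV (a - 1))) by (intros U; apply Hwest in U; auto).
  split.
  - exact (tiling_compatible a k n gN gS u w Hk VN VS Hw HgN Hu HgS D lab
             Hcons Hlab no_east no_west Htop Hbottom).
  - exact (tiling_eq_bpd_of a k n gN gS u w Hk VN VS Hw HgN Hu HgS D lab
             Hcons Hlab no_east no_west Htop Hbottom).
Qed.

Theorem lemma2p42 (a k n : Z) (gN gS : Z -> option Z) (u w : Z -> Z) :
  a <= k <= n ->
  values_exactly a k n gN ->
  values_exactly a k n gS ->
  in_S a n w ->
  (forall l, a <= l <= k -> gN (w l) = Some l) ->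
  (forall x y, k < x /\ x < y <= n -> w y < w x) ->
  in_S a n u ->
  (forall l, a <= l <= k -> gS (u l) = Some l) ->
  (forall x y, k < x /\ x < y <= n -> u y < u x) ->
  (kchain k u w <->
     exists D : tiling, is_BPD a n D /\ satisfies a n D gN None gS None) /\
  (kchain k u w ->
     exists D : tiling, is_BPD a n D /\ satisfies a n D gN None gS None /\
       (forall D' : tiling, is_BPD a n D' -> satisfies a n D' gN None gS None ->
          forall c, a <= c <= n -> D' c = D c) /\
       (forall c, a <= c <= n -> (D c = Blank <-> in_fix k n u w c))).
Proof.
  intros Hk VN VS Hw HgN Dw Hu HgS Du.
  pose proof (satisfying_bpd_spec a k n gN gS u w) as Hspec.
  split; [split|].
  - intros KC. pose proof (kchain_compatible a k n u w Hu Hw Du Dw KC) as Hc.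
    exists (bpd_of a k gN gS u w).
    split; [apply bpd_of_is_BPD|apply bpd_of_satisfies]; auto.
  - intros (D & HB & HS). apply (compatible_kchain a k n w); auto.
    apply (Hspec D); auto.
  - intros KC. pose proof (kchain_compatible a k n u w Hu Hw Du Dw KC) as Hc.
    exists (bpd_of a k gN gS u w).
    split; [apply bpd_of_is_BPD; auto|split; [apply bpd_of_satisfies; auto|split]].
    + intros D' HB HS. apply (Hspec D'); auto.
    + intros c Hc'. rewrite (bpd_of_blank a k n gN gS u w Hk VN VS Hw HgN Hu HgS Hc c Hc'). split.
      * intros (r & Hr & <- & Hout). exists r. split; auto. split; auto.
        apply (kchain_fixed_right_iff a k n u w); auto.
      * intros (r & Hr & Efix & ->). exists r. split; auto. split; auto.
        apply (kchain_fixed_right_iff a k n u w); auto.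
Qed.
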